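(* Let $\mathbb{S}=[0,1]$ with $0$ and $1$ identified, and let $H:\mathbb{S}\times\mathbb{R}\times\mathbb{R}\to\mathbb{R}$ be $C^\infty$ with $\frac{\partial^2H}{\partial p^2}>0$, $p\mapsto H(x,p,u)$ superlinear for each $(x,u)$, and $|\frac{\partial H}{\partial u}|\le\kappa$ for some $\kappa>0$. Let $u_0$ be a viscosity solution of $H(x,u'(x),u(x))=0$ on $\mathbb{S}$ such that $\frac{\partial H}{\partial p}(x,u_0'(x),u_0(x))\ne0$ at every differentiability point $x$ of $u_0$. Set $B(x)=\frac{\partial H}{\partial p}(x,u_0'(x),u_0(x))$, $$\mu=\frac{\int_0^1\frac{\partial H}{\partial u}(\tau,u_0'(\tau),u_0(\tau))B(\tau)^{-1}d\tau}{\int_0^1B(\tau)^{-1}d\tau},\qquad \rho(x)=\exp\left\{\int_0^x\frac{\mu-\frac{\partial H}{\partial u}(\tau,u_0'(\tau),u_0(\tau))}{B(\tau)}\,d\tau\right\},$$ $Z=-\int_0^1B(\tau)^{-1}d\tau$, $\mathcal{T}=|Z|$, and $f(x)=\frac{2\pi}{Z}\int_0^x\left(-B(\tau)^{-1}\right)d\tau$. Assume $\mu<0$. Fix $x_0\in\mathbb{S}$ and for $\epsilon>0$ define $$w(x,t)=u_0(x)+\epsilon\rho(x)+\epsilon\rho(x)\sin\!\Big(-\frac{\pi}{2}+f(x)-f(x_0)+\frac{2\pi}{Z}t\Big),\quad (x,t)\in\mathbb{S}\times[0,+\infty).$$ Then there exists $\tilde\epsilon_1>0$ such that for every $\epsilon\in(0,\tilde\epsilon_1]$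 and all $(x,t)\in\mathbb{S}\times[0,+\infty)$, $$w(x,t+\mathcal{T})=w(x,t)\quad\text{and}\quad \partial_tw(x,t)+H(x,\partial_xw(x,t),w(x,t))\le0.$$
   Context: It is known that under these assumptions $u_0$ is of class $C^\infty$, so $B$ is smooth and nowhere zero, and $\rho$ is a smooth positive function on $\mathbb{S}$. *)

From Stdlib Require Import Reals List.
From Coquelicot Require Import Coquelicot.
Open Scope R_scope.

(* The circle S = [0,1] with 0 ~ 1 is represented by 1-periodic functions on R. *)

(* Partial derivative of a function of three real variables (x,p,u)
   in direction i (0 = x, 1 = p, 2 = u). *)
Definition partial (i : nat) (g : R -> R -> R -> R) : R -> R -> R -> R :=
  match i with
  | O => fun x p u => Derive (fun y => g y p u) x
  | S O => fun x p u => Derive (fun q => g x q u) p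
  | _ => fun x p u => Derive (fun v => g x p v) u
  end.

Definition ex_partial (i : nat) (g : R -> R -> R -> R) (x p u : R) : Prop :=
  match i with
  | O => ex_derive (fun y => g y p u) x
  | S O => ex_derive (fun q => g x q u) p
  | _ => ex_derive (fun v => g x p v) u
  end.

(* Iterated partial derivative: apply the directions in l (innermost last). *)
Fixpoint pderiv (l : list nat) (g : R -> R -> R -> R) : R -> R -> R -> R :=
  match l with
  | nil => g
  | i :: l' => partial i (pderiv l' g)
  end.

Definition continuous3 (g : R -> R -> R -> R) (x p u : R) : Prop :=
  forall eps, 0 < eps -> exists delta, 0 < delta /\
    forall x' p' u', Rabs (x' - x) < delta -> Rabs (p' - p) < delta ->
      Rabs (u' - u) < delta -> Rabs (g x' p' u' - g x p u) < eps.

Definition smooth3 (g : R -> R -> R -> R) : Prop :=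
  forall l : list nat,
    (forall x p u, continuous3 (pderiv l g) x p u) /\
    (forall i x p u, ex_partial i (pderiv l g) x p u).

Definition Hp (H : R -> R -> R -> R) : R -> R -> R -> R := partial 1 H.
Definition Hu (H : R -> R -> R -> R) : R -> R -> R -> R := partial 2 H.
Definition Hpp (H : R -> R -> R -> R) : R -> R -> R -> R := partial 1 (partial 1 H).

Definition superlinear_p (H : R -> R -> R -> R) : Prop :=
  forall x u M : R, exists R0 : R, forall p : R, R0 <= Rabs p -> M * Rabs p <= H x p u.

Definition periodic1 (f : R -> R) : Prop := forall x, f (x + 1) = f x.

Definition C1 (phi : R -> R) : Prop :=
  (forall x, ex_derive phi x) /\ (forall x, continuous (Derive phi) x).

Definition local_max_at (g : R -> R) (x : R) : Prop :=
  exists r, 0 < r /\ forall y, Rabs (y - x) < r -> g y <= g x.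
Definition local_min_at (g : R -> R) (x : R) : Prop :=
  exists r, 0 < r /\ forall y, Rabs (y - x) < r -> g x <= g y.

Definition viscosity_solution (H : R -> R -> R -> R) (u : R -> R) : Prop :=
  periodic1 u /\ (forall x, continuous u x) /\
  (forall phi x, C1 phi -> local_max_at (fun y => u y - phi y) x ->
     H x (Derive phi x) (u x) <= 0) /\
  (forall phi x, C1 phi -> local_min_at (fun y => u y - phi y) x ->
     0 <= H x (Derive phi x) (u x)).

Section Quantities.
Variables (H : R -> R -> R -> R) (u0 : R -> R).

Definition Bfun (x : R) : R := Hp H x (Derive u0 x) (u0 x).
Definition Hu0 (x : R) : R := Hu H x (Derive u0 x) (u0 x).

Definition mu : R :=
  RInt (fun t => Hu0 t / Bfun t) 0 1 / RInt (fun t => / Bfun t) 0 1.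

Definition rho (x : R) : R :=
  exp (RInt (fun t => (mu - Hu0 t) / Bfun t) 0 x).

Definition Zc : R := - RInt (fun t => / Bfun t) 0 1.

Definition Tper : R := Rabs Zc.

Definition ffun (x : R) : R := 2 * PI / Zc * RInt (fun t => - / Bfun t) 0 x.

Definition wfun (x0 eps x t : R) : R :=
  u0 x + eps * rho x
  + eps * rho x * sin (- (PI / 2) + ffun x - ffun x0 + 2 * PI / Zc * t).

End Quantities.

From Pilot Require Import Defs.
From Stdlib Require Import Reals Lra Classical List.
From Coquelicot Require Import Coquelicot.
Open Scope R_scope.

(* First, [u0] is a classical C^1 solution.  By coercivity it is Lipschitz.  A slope
   that the difference quotients of [u0] at [x] both exceed and undercut at arbitrarily
   small scales is a root of the strictly convex [p |-> H x p (u0 x)] (test with lines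
   touching from above and below), and this function has at most two roots, so the
   one-sided derivatives exist and are roots.  A convex kink is excluded by the
   supersolution test; at a concave kink the right derivative lies on the decreasing
   branch of [p |-> H x p (u0 x)] while the points just to the left lie on the increasing
   one.  Both branch properties propagate to one side, the increasing one is invariant
   under integer translation, and [R] is connected, so the branch is the same at every
   point: this excludes kinks, and [Derive u0] is continuous because the root on a fixed
   branch of a strictly convex function depends continuously on the function.

   Then write [w = u0 + b] and [dw/dx = u0' + a] with [a, b = O(eps)].  A second-order
   Taylor expansion of [H] around the classical solution [u0] bounds
   [dw/dt + H (x, dw/dx, w)] by its first-order terms plus [K (a^2 + b^2)].  The choice of
   [mu], [rho] and [f] makes the first-order terms equal to [eps mu rho (1 + sin)], while
   [a^2 + b^2 = O(eps^2 (1 + sin))]; since [mu < 0] the sum is nonpositive for small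
   [eps].  Periodicity in [t] holds because [2 pi / Z * |Z| = +- 2 pi]. *)

Lemma continuous_epsilon_delta (f : R -> R) (x : R) :
  continuous f x <->
  forall eps, 0 < eps -> exists del, 0 < del /\
    forall y, Rabs (y - x) < del -> Rabs (f y - f x) < eps.
Proof.
  split.
  - intros Hc eps He. apply continuity_pt_filterlim in Hc. destruct (Hc eps He) as [del [Hd HD]].
    exists del; split; auto. intros y Hy.
    destruct (Req_dec y x) as [->|Hne].
    + rewrite Rminus_eq_0, Rabs_R0. lra.
    + apply (HD y). split; [split; [exact I|congruence]|exact Hy].
  - intros H. apply continuity_pt_filterlim. intros eps He.
    destruct (H eps He) as [d [Hd HD]].
    exists d; split; auto. intros y [_ Hy]. apply HD, Hy.
Qed.

Lemma ex_derive_continuous_R (f : R -> R) (x : R) : ex_derive f x -> continuous f x.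
Proof. apply (ex_derive_continuous (K := R_AbsRing) (V := R_NormedModule)). Qed.

Lemma continuous_attains_max (f : R -> R) (a b : R) : a <= b ->
  (forall c, a <= c <= b -> continuous f c) ->
  exists m, a <= m <= b /\ forall c, a <= c <= b -> f c <= f m.
Proof.
  intros Hab Hc. destruct (continuity_ab_maj f a b Hab) as [m [H1 H2]].
  - intros c Hc'. apply continuity_pt_filterlim, Hc, Hc'.
  - exists m; auto.
Qed.

Lemma continuous_attains_min (f : R -> R) (a b : R) : a <= b ->
  (forall c, a <= c <= b -> continuous f c) ->
  exists m, a <= m <= b /\ forall c, a <= c <= b -> f m <= f c.
Proof.
  intros Hab Hc. destruct (continuity_ab_min f a b Hab) as [m [H1 H2]].
  - intros c Hc'. apply continuity_pt_filterlim, Hc, Hc'.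
  - exists m; auto.
Qed.

Lemma local_max_at_interior (f : R -> R) (a b m : R) : a < m < b ->
  (forall c, a <= c <= b -> f c <= f m) -> local_max_at f m.
Proof.
  intros Hm H. exists (Rmin (m - a) (b - m)). split; [apply Rmin_pos; lra|].
  intros y Hy. pose proof (Rmin_l (m - a) (b - m)). pose proof (Rmin_r (m - a) (b - m)).
  apply Rabs_def2 in Hy. apply H. lra.
Qed.

Lemma local_min_at_interior (f : R -> R) (a b m : R) : a < m < b ->
  (forall c, a <= c <= b -> f m <= f c) -> local_min_at f m.
Proof.
  intros Hm H. exists (Rmin (m - a) (b - m)). split; [apply Rmin_pos; lra|].
  intros y Hy. pose proof (Rmin_l (m - a) (b - m)). pose proof (Rmin_r (m - a) (b - m)).
  apply Rabs_def2 in Hy. apply H. lra.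
Qed.

Lemma local_max_at_ext (f g : R -> R) z :
  (forall y, f y = g y) -> local_max_at f z -> local_max_at g z.
Proof. intros E [r [Hr HR]]. exists r; split; auto. intros y Hy. rewrite <- !E. auto. Qed.

Lemma local_min_at_ext (f g : R -> R) z :
  (forall y, f y = g y) -> local_min_at f z -> local_min_at g z.
Proof. intros E [r [Hr HR]]. exists r; split; auto. intros y Hy. rewrite <- !E. auto. Qed.

(* Lebesgue's "creeping" proof of the compactness of [a, b]. *)
Lemma interval_local_to_global (Q : R -> R -> Prop) (a b : R) :
  a <= b ->
  (forall c d c' d', Q c d -> c <= c' -> d' <= d -> Q c' d') ->
  (forall c d e, Q c d -> Q d e -> Q c e) ->
  (forall z, a <= z <= b -> exists del, 0 < del /\ Q (z - del) (z + del)) ->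
  Q a b.
Proof.
  intros Hab Hmon Hcat Hloc.
  set (E := fun s => a <= s <= b /\ Q a s).
  assert (Ea : E a).
  { destruct (Hloc a) as [d [Hd Hq]]; [lra|]. split; [lra|].
    apply (Hmon _ _ _ _ Hq); lra. }
  assert (Eb : bound E) by (exists b; intros s [Hs _]; lra).
  destruct (completeness E Eb (ex_intro _ a Ea)) as [m [Hub Hlub]].
  assert (Ham : a <= m) by (apply Hub; exact Ea).
  assert (Hmb : m <= b) by (apply Hlub; intros s [Hs _]; lra).
  destruct (Hloc m) as [d [Hd Hq]]; [lra|].
  assert (Hs : exists s, E s /\ m - d < s).
  { apply NNPP; intro Hn. assert (m <= m - d); [|lra].
    apply Hlub. intros s Es. apply Rnot_lt_le. intro Hlt. apply Hn. exists s; auto. }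
  destruct Hs as [s [[Hs1 Hs2] Hs3]].
  assert (Hsm : s <= m) by (apply Hub; split; auto).
  pose proof (Rmin_l b (m + d / 2)). pose proof (Rmin_r b (m + d / 2)).
  set (e := Rmin b (m + d / 2)) in *.
  assert (Qae : Q a e).
  { apply (Hcat _ s); auto. apply (Hmon _ _ _ _ Hq); lra. }
  assert (Hem : e <= m) by (apply Hub; split; [split; [apply Rmin_glb|]|]; auto; lra).
  unfold e in *. destruct (Rle_dec b (m + d / 2)) as [Hle|Hlt].
  - rewrite Rmin_left in Qae by lra. exact Qae.
  - rewrite Rmin_right in Hem by lra. lra.
Qed.

(* [S del M v] reads "the bound [M] holds at [v], uniformly in a [del]-neighbourhood
   of some fixed point in the other variables". *)
Lemma uniform_bound_on_interval (S : R -> R -> R -> Prop) (a b : R) :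
  (forall del M v del' M', S del M v -> 0 < del' <= del -> M <= M' -> S del' M' v) ->
  (forall z, a <= z <= b -> exists eta del M, 0 < eta /\ 0 < del /\
     forall v, Rabs (v - z) < eta -> S del M v) ->
  exists del M, 0 < del /\ forall v, a <= v <= b -> S del M v.
Proof.
  intros Hmon Hloc.
  destruct (Rle_dec a b) as [Hab|Hab].
  2:{ exists 1, 0. split; [lra|]. intros; lra. }
  set (Q := fun c d => exists del M, 0 < del /\ forall v, c <= v <= d -> S del M v).
  change (Q a b). apply interval_local_to_global; auto.
  - intros c d c' d' [del [M [Hd HM]]] Hc Hd'. exists del, M. split; auto.
    intros v Hv. apply HM. lra.
  - intros c d e [d1 [M1 [Hd1 HM1]]] [d2 [M2 [Hd2 HM2]]].
    exists (Rmin d1 d2), (Rmax M1 M2). split; [apply Rmin_pos; auto|].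
    pose proof (Rmin_l d1 d2). pose proof (Rmin_r d1 d2).
    pose proof (Rmax_l M1 M2). pose proof (Rmax_r M1 M2).
    assert (0 < Rmin d1 d2) by (apply Rmin_pos; auto).
    intros v Hv. destruct (Rle_dec v d).
    + apply (Hmon d1 M1); [apply HM1|split|]; lra.
    + apply (Hmon d2 M2); [apply HM2|split|]; lra.
  - intros z Hz. destruct (Hloc z Hz) as [eta [del [M [He [Hd HS]]]]].
    exists (eta / 2). split; [lra|]. exists del, M. split; auto.
    intros v Hv. apply HS. apply Rabs_def1; lra.
Qed.

Lemma continuous3_bounded_on_box (g : R -> R -> R -> R) :
  (forall x p v, continuous3 g x p v) ->
  forall a1 b1 a2 b2 a3 b3, exists M, forall x p v,
    a1 <= x <= b1 -> a2 <= p <= b2 -> a3 <= v <= b3 -> Rabs (g x p v) <= M.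
Proof.
  intros Hc a1 b1 a2 b2 a3 b3.
  assert (Bv : forall x p, exists del M, 0 < del /\ forall v, a3 <= v <= b3 ->
     forall x' p', Rabs (x' - x) < del -> Rabs (p' - p) < del -> Rabs (g x' p' v) <= M).
  { intros x p. apply (uniform_bound_on_interval
      (fun del M v => forall x' p', Rabs (x' - x) < del -> Rabs (p' - p) < del ->
                        Rabs (g x' p' v) <= M)).
    - intros del M v del' M' HS Hd HM x' p' Hx Hp.
      pose proof (HS x' p' ltac:(lra) ltac:(lra)). lra.
    - intros z _. destruct (Hc x p z 1 Rlt_0_1) as [del [Hd HD]].
      exists del, del, (Rabs (g x p z) + 1). do 2 (split; auto).
      intros v Hv x' p' Hx Hp. specialize (HD x' p' v Hx Hp Hv).
      pose proof (Rabs_triang_inv (g x' p' v) (g x p z)). lra. }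
  assert (Bpv : forall x, exists del M, 0 < del /\ forall p, a2 <= p <= b2 ->
     forall x', Rabs (x' - x) < del -> forall v, a3 <= v <= b3 -> Rabs (g x' p v) <= M).
  { intros x. apply (uniform_bound_on_interval
      (fun del M p => forall x', Rabs (x' - x) < del -> forall v, a3 <= v <= b3 ->
                        Rabs (g x' p v) <= M)).
    - intros del M p del' M' HS Hd HM x' Hx v Hv.
      pose proof (HS x' ltac:(lra) v Hv). lra.
    - intros z _. destruct (Bv x z) as [del [M [Hd HM]]].
      exists del, del, M. do 2 (split; auto). }
  destruct (uniform_bound_on_interval
      (fun _ M x => forall p v, a2 <= p <= b2 -> a3 <= v <= b3 -> Rabs (g x p v) <= M)
      a1 b1) as [_ [M [_ HM]]].
  - intros del M x del' M' HS _ HMM p v Hp Hv. pose proof (HS p v Hp Hv). lra.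
  - intros z _. destruct (Bpv z) as [del [M [Hd HM]]].
    exists del, 1, M. split; auto. split; [lra|].
    intros x Hx p v Hp Hv. apply HM; auto.
  - exists M. intros x p v Hx Hp Hv. apply HM; auto.
Qed.

Lemma shift_Z_of_shift_1 (P : R -> Prop) : (forall x, P (x + 1) <-> P x) ->
  forall n x, P x -> P (x + IZR n).
Proof.
  intros Hp n. induction n using Z.peano_ind; intros x Hx.
  - rewrite Rplus_0_r. exact Hx.
  - rewrite succ_IZR. replace (x + (IZR n + 1)) with ((x + IZR n) + 1) by ring.
    apply Hp, IHn, Hx.
  - assert (E : IZR n = IZR (Z.pred n) + 1) by (rewrite <- succ_IZR, Z.succ_pred; auto).
    apply Hp. replace (x + IZR (Z.pred n) + 1) with (x + IZR n) by lra. apply IHn, Hx.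
Qed.

Lemma periodic1_reduce (f : R -> R) : periodic1 f ->
  forall x, exists y, 0 <= y <= 1 /\ f x = f y.
Proof.
  intros Hp x. destruct (archimed x) as [H1 H2].
  set (n := (up x - 1)%Z). set (y := x - IZR n).
  exists y. split; [unfold y, n; rewrite minus_IZR; simpl; lra|].
  replace x with (y + IZR n) by (unfold y; ring).
  apply (shift_Z_of_shift_1 (fun z => f z = f y)); auto.
  intros z. rewrite Hp. tauto.
Qed.

Lemma periodic1_bounded (f : R -> R) : periodic1 f ->
  (forall x, 0 <= x <= 1 -> continuous f x) ->
  exists M, forall x, Rabs (f x) <= M.
Proof.
  intros Hp Hc.
  destruct (continuous_attains_max (fun x => Rabs (f x)) 0 1) as [m [Hm HM]]; [lra| |].
  - intros c Hc'. apply continuous_comp; [apply Hc; auto|apply continuous_Rabs].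
  - exists (Rabs (f m)). intros x. destruct (periodic1_reduce f Hp x) as [y [Hy ->]].
    apply HM, Hy.
Qed.

Definition parabola (c p k x1 : R) (y : R) : R :=
  c + p * (y - x1) + k * ((y - x1) * (y - x1)).

Lemma parabola_is_derive (c p k x1 y : R) :
  is_derive (parabola c p k x1) y (p + 2 * k * (y - x1)).
Proof. unfold parabola. auto_derive; auto. ring. Qed.

Lemma parabola_C1 (c p k x1 : R) : Defs.C1 (parabola c p k x1).
Proof.
  split; [intro y; eexists; apply parabola_is_derive|].
  intro y. apply (continuous_ext (fun y => p + 2 * k * (y - x1))).
  - intro t. symmetry. apply is_derive_unique, parabola_is_derive.
  - apply ex_derive_continuous_R. auto_derive. auto.
Qed.

Lemma Derive_parabola (c p k x1 y : R) :
  Derive (parabola c p k x1) y = p + 2 * k * (y - x1).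
Proof. apply is_derive_unique, parabola_is_derive. Qed.

(* [P] propagates to the right and [Q] to the left, so the supremum of the run of [P]
   starting at [b] can satisfy neither. *)
Lemma no_switch (P Q : R -> Prop) (b a : R) : b < a ->
  (forall x, P x \/ Q x) -> (forall x, P x -> Q x -> False) ->
  (forall x, P x -> exists h, 0 < h /\ forall w, x < w < x + h -> P w) ->
  (forall x, Q x -> exists h, 0 < h /\ forall w, x - h < w < x -> Q w) ->
  P b -> Q a -> False.
Proof.
  intros Hba HPQ Hdisj HPr HQl Hb Ha.
  set (E := fun s => b <= s <= a /\ forall v, b <= v <= s -> P v).
  assert (Eb : E b) by (split; [lra|intros v Hv; replace v with b by lra; auto]).
  assert (Ebd : bound E) by (exists a; intros s [Hs _]; lra).
  destruct (completeness E Ebd (ex_intro _ _ Eb)) as [s [Hub Hlub]].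
  assert (Hbs : b <= s) by (apply Hub; auto).
  assert (Hsa : s <= a) by (apply Hlub; intros y [Hy _]; lra).
  assert (below : forall v, b <= v < s -> P v).
  { intros v Hv. apply NNPP. intro Hn.
    assert (s <= v); [|lra]. apply Hlub. intros y [Hy1 Hy2]. apply Rnot_lt_le. intro Hlt.
    apply Hn, Hy2. lra. }
  destruct (HPQ s) as [Hs|Hs].
  - destruct (HPr s Hs) as [h [Hh HR]].
    assert (Hsa' : s < a) by (destruct (Req_dec s a) as [->|]; [exfalso; eauto|lra]).
    pose proof (Rmin_l (s + h / 2) a). pose proof (Rmin_r (s + h / 2) a).
    assert (s < Rmin (s + h / 2) a) by (apply Rmin_glb_lt; lra).
    set (e := Rmin (s + h / 2) a) in *.
    assert (He : E e).
    { split; [lra|]. intros v Hv. destruct (Rtotal_order v s) as [Hl|[->|Hg]].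
      - apply below; lra.
      - exact Hs.
      - apply HR. lra. }
    specialize (Hub e He). lra.
  - assert (Hbs' : b < s) by (destruct (Req_dec b s) as [<-|]; [exfalso; eauto|lra]).
    destruct (HQl s Hs) as [h [Hh HL]].
    pose proof (Rmax_l b (s - h / 2)). pose proof (Rmax_r b (s - h / 2)).
    set (w := Rmax b (s - h / 2)) in *.
    assert (w < s) by (unfold w; apply Rmax_lub_lt; lra).
    apply (Hdisj w); [apply below; lra|apply HL; lra].
Qed.

Lemma continuous3_comp (g : R -> R -> R -> R) (a b c : R -> R) x :
  (forall x p v, continuous3 g x p v) ->
  continuous a x -> continuous b x -> continuous c x ->
  continuous (fun y => g (a y) (b y) (c y)) x.
Proof.
  intros Hg Ha Hb Hc. apply continuous_epsilon_delta. intros eps He.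
  destruct (Hg (a x) (b x) (c x) eps He) as [d [Hd HD]].
  destruct (proj1 (continuous_epsilon_delta a x) Ha d Hd) as [d1 [Hd1 HD1]].
  destruct (proj1 (continuous_epsilon_delta b x) Hb d Hd) as [d2 [Hd2 HD2]].
  destruct (proj1 (continuous_epsilon_delta c x) Hc d Hd) as [d3 [Hd3 HD3]].
  exists (Rmin d1 (Rmin d2 d3)). split; [repeat apply Rmin_pos; auto|].
  pose proof (Rmin_l d1 (Rmin d2 d3)). pose proof (Rmin_r d1 (Rmin d2 d3)).
  pose proof (Rmin_l d2 d3). pose proof (Rmin_r d2 d3).
  intros y Hy. apply HD; [apply HD1|apply HD2|apply HD3]; lra.
Qed.

Lemma continuous3_comp_graph (g : R -> R -> R -> R) (u : R -> R) :
  (forall x p v, continuous3 g x p v) -> (forall y, continuous u y) ->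
  forall z p eps, 0 < eps -> exists del, 0 < del /\ forall z' p',
    Rabs (z' - z) < del -> Rabs (p' - p) < del -> Rabs (g z' p' (u z') - g z p (u z)) < eps.
Proof.
  intros Hg Hu z p eps He.
  destruct (Hg z p (u z) eps He) as [d1 [Hd1 HD1]].
  destruct (proj1 (continuous_epsilon_delta u z) (Hu z) d1 Hd1) as [d2 [Hd2 HD2]].
  exists (Rmin d1 d2). split; [apply Rmin_pos; auto|].
  pose proof (Rmin_l d1 d2). pose proof (Rmin_r d1 d2).
  intros z' p' Hz Hp. apply HD1; try lra. apply HD2. lra.
Qed.

Section SmoothFunction.

Variable H : R -> R -> R -> R.

Lemma pderiv_periodic (l : list nat) : (forall x p v, H (x + 1) p v = H x p v) ->
  List.Forall (fun i => i <> 0%nat) l -> forall x p v, pderiv l H (x + 1) p v = pderiv l H x p v.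
Proof.
  intros Hper. induction l as [|i l IH]; intros Hl x p v; simpl; [apply Hper|].
  inversion Hl; subst. destruct i as [|[|i]]; [contradiction| |]; simpl;
  apply Derive_ext; intros; apply IH; auto.
Qed.

Lemma Hp_periodic : (forall x p v, H (x + 1) p v = H x p v) ->
  forall x p v, Hp H (x + 1) p v = Hp H x p v.
Proof.
  intros Hper. exact (pderiv_periodic (1%nat :: nil) Hper ltac:(repeat constructor; discriminate)).
Qed.

Lemma Hu_periodic : (forall x p v, H (x + 1) p v = H x p v) ->
  forall x p v, Hu H (x + 1) p v = Hu H x p v.
Proof.
  intros Hper. exact (pderiv_periodic (2%nat :: nil) Hper ltac:(repeat constructor; discriminate)).
Qed.

Hypothesis H_smooth : smooth3 H.

Lemma pderiv_continuous3 (l : list nat) x p v : continuous3 (pderiv l H) x p v.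
Proof. exact (proj1 (H_smooth l) x p v). Qed.

Lemma pderiv_is_derive_p (l : list nat) x p v :
  is_derive (fun q => pderiv l H x q v) p (pderiv (1%nat :: l) H x p v).
Proof. apply Derive_correct. exact (proj2 (H_smooth l) 1%nat x p v). Qed.

Lemma pderiv_is_derive_u (l : list nat) x p v :
  is_derive (fun w => pderiv l H x p w) v (pderiv (2%nat :: l) H x p v).
Proof. apply Derive_correct. exact (proj2 (H_smooth l) 2%nat x p v). Qed.

End SmoothFunction.

Lemma mul_pos_of_close (l a b : R) : 0 < l * a -> Rabs (b - a) < Rabs a -> 0 < l * b.
Proof.
  intros Hla Hb. apply Rabs_def2 in Hb.
  destruct (Rlt_or_le a 0) as [Ha|Ha].
  - rewrite Rabs_left in Hb by lra. nra.
  - rewrite Rabs_pos_eq in Hb by lra. nra.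
Qed.

(** * One-sided derivatives of viscosity solutions *)

Definition is_right_deriv (f : R -> R) (x d : R) : Prop :=
  forall eps, 0 < eps -> exists del, 0 < del /\
    forall h, 0 < h < del -> Rabs (f (x + h) - f x - d * h) <= eps * h.

Definition is_left_deriv (f : R -> R) (x d : R) : Prop :=
  forall eps, 0 < eps -> exists del, 0 < del /\
    forall h, 0 < h < del -> Rabs (f (x - h) - f x + d * h) <= eps * h.

Lemma is_right_deriv_unique (f : R -> R) (x d1 d2 : R) :
  is_right_deriv f x d1 -> is_right_deriv f x d2 -> d1 = d2.
Proof.
  intros H1 H2. apply NNPP. intro Hne.
  assert (Hne' : d1 - d2 <> 0) by (intro; apply Hne; lra).
  assert (He : 0 < Rabs (d1 - d2) / 4) by (pose proof (Rabs_pos_lt _ Hne'); lra).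
  destruct (H1 _ He) as [a [Ha HA]]. destruct (H2 _ He) as [b [Hb HB]].
  pose proof (Rmin_l a b). pose proof (Rmin_r a b).
  assert (0 < Rmin a b) by (apply Rmin_pos; auto).
  set (h := Rmin a b / 2) in *.
  specialize (HA h ltac:(unfold h; lra)). specialize (HB h ltac:(unfold h; lra)).
  pose proof (Rabs_triang (f (x + h) - f x - d2 * h) (- (f (x + h) - f x - d1 * h))) as T.
  rewrite Rabs_Ropp in T.
  replace (f (x + h) - f x - d2 * h + - (f (x + h) - f x - d1 * h)) with ((d1 - d2) * h) in T by ring.
  rewrite Rabs_mult, (Rabs_pos_eq h) in T by (unfold h; lra).
  assert (0 < h) by (unfold h; lra). nra.
Qed.

Lemma is_derive_of_right_left (f : R -> R) (x d : R) :
  is_right_deriv f x d -> is_left_deriv f x d -> is_derive f x d.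
Proof.
  intros H1 H2. apply is_derive_Reals. intros eps He.
  destruct (H1 (eps / 2)) as [d1 [Hd1 HD1]]; [lra|].
  destruct (H2 (eps / 2)) as [d2 [Hd2 HD2]]; [lra|].
  assert (Hm : 0 < Rmin d1 d2) by (apply Rmin_pos; auto).
  exists (mkposreal _ Hm). intros h Hh0 Hh. simpl in Hh.
  pose proof (Rmin_l d1 d2). pose proof (Rmin_r d1 d2).
  replace ((f (x + h) - f x) / h - d) with ((f (x + h) - f x - d * h) / h) by (field; auto).
  rewrite Rabs_div by auto.
  apply (Rmult_lt_reg_r (Rabs h)); [apply Rabs_pos_lt; auto|].
  unfold Rdiv. rewrite Rmult_assoc, Rinv_l, Rmult_1_r by (apply Rabs_no_R0; auto).
  destruct (Rtotal_order h 0) as [Hn|[Hz|Hp]]; [|contradiction|].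
  - rewrite (Rabs_left h) in Hh |- * by lra.
    specialize (HD2 (- h) ltac:(lra)). replace (x - - h) with (x + h) in HD2 by ring.
    replace (f (x + h) - f x + d * - h) with (f (x + h) - f x - d * h) in HD2 by ring.
    assert (0 < eps * - h) by (apply Rmult_lt_0_compat; lra). lra.
  - rewrite (Rabs_pos_eq h) in Hh |- * by lra. specialize (HD1 h ltac:(lra)).
    assert (0 < eps * h) by (apply Rmult_lt_0_compat; lra). lra.
Qed.

Lemma is_left_deriv_reflect (f : R -> R) (x d : R) :
  is_right_deriv (fun y => f (- y)) (- x) d -> is_left_deriv f x (- d).
Proof.
  intros Hd eps He. destruct (Hd eps He) as [del [Hdel HD]]. exists del; split; auto.
  intros h Hh. specialize (HD h Hh). replace (- (- x + h)) with (x - h) in HD by ring.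
  rewrite Ropp_involutive in HD.
  replace (f (x - h) - f x + - d * h) with (f (x - h) - f x - d * h) by ring. exact HD.
Qed.

Lemma is_right_deriv_periodic1 (f : R -> R) (x d : R) : periodic1 f ->
  (is_right_deriv f (x + 1) d <-> is_right_deriv f x d).
Proof.
  intros Hp. unfold is_right_deriv.
  assert (E : forall h, f (x + 1 + h) = f (x + h)).
  { intros h. replace (x + 1 + h) with ((x + h) + 1) by ring. apply Hp. }
  split; intros Hd eps He; destruct (Hd eps He) as [del [Hdel HD]];
    exists del; split; auto; intros h Hh; specialize (HD h Hh);
    rewrite ?E, ?Hp in *; exact HD.
Qed.

Section RightDerivative.

Variables (v : R -> R) (G : R -> R -> R) (z0 L : R).
Hypothesis v_cont : forall y, continuous v y.
Hypothesis G_cont_z0 : forall p eps, 0 < eps -> exists del, 0 < del /\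
  forall z, Rabs (z - z0) < del -> Rabs (G z p - G z0 p) < eps.
Hypothesis v_sub : forall z p, local_max_at (fun y => v y - p * y) z -> G z p <= 0.
Hypothesis v_super : forall z p, local_min_at (fun y => v y - p * y) z -> 0 <= G z p.
Hypothesis G_no_three_roots : forall a b c, a < b -> b < c ->
  G z0 a = 0 -> G z0 b = 0 -> G z0 c = 0 -> False.
Hypothesis v_lip : forall h, 0 < h <= 1 -> Rabs (v (z0 + h) - v z0) <= L * h.

Definition slope_exceeds (p : R) : Prop :=
  forall del, 0 < del -> exists h, 0 < h < del /\ p * h < v (z0 + h) - v z0.

Definition slope_undercuts (p : R) : Prop :=
  forall del, 0 < del -> exists h, 0 < h < del /\ v (z0 + h) - v z0 < p * h.

Let line_continuous p y : continuous (fun y => v y - p * y) y.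
Proof.
  apply (continuous_minus v (fun y => p * y)); auto.
  apply ex_derive_continuous_R; auto_derive; auto.
Qed.

(* If the difference quotients oscillate around [p] at arbitrarily small scales, the
   line of slope [p] touches [v] from above and from below arbitrarily close to [z0]. *)
Lemma G_root_of_oscillation (p : R) :
  slope_exceeds p -> slope_undercuts p -> G z0 p = 0.
Proof.
  intros HA HB. set (g := fun y => v y - p * y).
  destruct (Rtotal_order (G z0 p) 0) as [Hlt|[Heq|Hgt]]; auto; exfalso.
  - destruct (G_cont_z0 p (- G z0 p)) as [del [Hd HD]]; [lra|].
    destruct (HA del Hd) as [h1 [Hh1 E1]].
    destruct (HB h1) as [h2 [Hh2 E2]]; [lra|].
    destruct (HA h2) as [h3 [Hh3 E3]]; [lra|].
    destruct (continuous_attains_min g (z0 + h3) (z0 + h1)) as [m [Hm HM]];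
      [lra|intros; apply line_continuous|].
    assert (Hg2 : g m <= g (z0 + h2)) by (apply HM; lra).
    assert (Hg1 : g m <= g (z0 + h1)) by (apply HM; lra).
    assert (Hg3 : g m <= g (z0 + h3)) by (apply HM; lra).
    unfold g in *.
    assert (Hl : local_min_at g m).
    { apply (local_min_at_interior _ (z0 + h3) (z0 + h1)); auto.
      split; apply Rnot_le_lt; intro Hle.
      - assert (m = z0 + h3) by lra. subst m. lra.
      - assert (m = z0 + h1) by lra. subst m. lra. }
    apply v_super in Hl. specialize (HD m ltac:(apply Rabs_def1; lra)).
    apply Rabs_def2 in HD. lra.
  - destruct (G_cont_z0 p (G z0 p)) as [del [Hd HD]]; [lra|].
    destruct (HB del Hd) as [h1 [Hh1 E1]].
    destruct (HA h1) as [h2 [Hh2 E2]]; [lra|].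
    destruct (HB h2) as [h3 [Hh3 E3]]; [lra|].
    destruct (continuous_attains_max g (z0 + h3) (z0 + h1)) as [m [Hm HM]];
      [lra|intros; apply line_continuous|].
    assert (Hg2 : g (z0 + h2) <= g m) by (apply HM; lra).
    assert (Hg1 : g (z0 + h1) <= g m) by (apply HM; lra).
    assert (Hg3 : g (z0 + h3) <= g m) by (apply HM; lra).
    unfold g in *.
    assert (Hl : local_max_at g m).
    { apply (local_max_at_interior _ (z0 + h3) (z0 + h1)); auto.
      split; apply Rnot_le_lt; intro Hle.
      - assert (m = z0 + h3) by lra. subst m. lra.
      - assert (m = z0 + h1) by lra. subst m. lra. }
    apply v_sub in Hl. specialize (HD m ltac:(apply Rabs_def1; lra)).
    apply Rabs_def2 in HD. lra.
Qed.

(* The right derivative is the supremum [c] of the slopes exceeded at small scales: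
   a slope slightly below [c] that is also undercut would give a whole interval of
   roots of [G z0] by [G_root_of_oscillation]. *)
Lemma viscosity_right_deriv_exists : exists d, is_right_deriv v z0 d.
Proof.
  assert (HL : forall h, 0 < h <= 1 -> - (L * h) <= v (z0 + h) - v z0 <= L * h).
  { intros h Hh. pose proof (v_lip h Hh) as E. apply Rabs_le_between' in E. lra. }
  assert (exceeds_down : forall p p', slope_exceeds p -> p' <= p -> slope_exceeds p').
  { intros p p' HA Hp del Hd. destruct (HA del Hd) as [h [Hh E]]. exists h; split; auto. nra. }
  assert (undercuts_up : forall p p', slope_undercuts p -> p <= p' -> slope_undercuts p').
  { intros p p' HB Hp del Hd. destruct (HB del Hd) as [h [Hh E]]. exists h; split; auto. nra. }
  assert (exceeds_low : slope_exceeds (- L - 1)).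
  { intros del Hd. pose proof (Rmin_l del 1). pose proof (Rmin_r del 1).
    assert (0 < Rmin del 1) by (apply Rmin_pos; lra).
    exists (Rmin del 1 / 2). split; [lra|]. specialize (HL (Rmin del 1 / 2)). nra. }
  assert (exceeds_bounded : bound slope_exceeds).
  { exists L. intros p HA. apply Rnot_lt_le. intro Hlt.
    destruct (HA 1 Rlt_0_1) as [h [Hh E]]. specialize (HL h). nra. }
  destruct (completeness _ exceeds_bounded (ex_intro _ _ exceeds_low)) as [c [Hub Hlub]].
  assert (exceeds_below_c : forall p, p < c -> slope_exceeds p).
  { intros p Hp. apply NNPP. intro HnA.
    assert (c <= p); [|lra]. apply Hlub. intros a Ha. apply Rnot_lt_le. intro Hlt.
    apply HnA. apply (exceeds_down a); auto; lra. }
  assert (not_undercuts : forall e, 0 < e -> ~ slope_undercuts (c - e)).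
  { intros e He HB.
    apply (G_no_three_roots (c - 3 * e / 4) (c - e / 2) (c - e / 4)); try lra;
    apply G_root_of_oscillation; try (apply exceeds_below_c; lra);
    apply (undercuts_up (c - e)); auto; lra. }
  assert (not_exceeds : forall e, 0 < e -> ~ slope_exceeds (c + e)).
  { intros e He HA. specialize (Hub _ HA). lra. }
  exists c. intros eps He.
  pose proof (not_exceeds (eps / 2) ltac:(lra)) as NA.
  pose proof (not_undercuts (eps / 2) ltac:(lra)) as NB.
  apply not_all_ex_not in NA as [d1 NA]. apply imply_to_and in NA as [Hd1 NA].
  apply not_all_ex_not in NB as [d2 NB]. apply imply_to_and in NB as [Hd2 NB].
  exists (Rmin d1 d2). split; [apply Rmin_pos; auto|].
  intros h Hh. pose proof (Rmin_l d1 d2). pose proof (Rmin_r d1 d2).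
  assert (E1 : v (z0 + h) - v z0 <= (c + eps / 2) * h).
  { apply Rnot_lt_le. intro Hlt. apply NA. exists h. split; [lra|exact Hlt]. }
  assert (E2 : (c - eps / 2) * h <= v (z0 + h) - v z0).
  { apply Rnot_lt_le. intro Hlt. apply NB. exists h. split; [lra|exact Hlt]. }
  apply Rabs_le. nra.
Qed.

End RightDerivative.

(** * Strictly convex functions *)

Lemma mean_value (f df : R -> R) (a b : R) :
  (forall q, is_derive f q (df q)) -> a < b ->
  exists c, a <= c <= b /\ f b - f a = df c * (b - a).
Proof.
  intros Hd Hab. destruct (MVT_gen f a b df) as [c [Hc E]].
  - intros; apply Hd.
  - intros; apply continuity_pt_filterlim, ex_derive_continuous_R. eexists; apply Hd.
  - rewrite Rmin_left, Rmax_right in Hc by lra. exists c; auto.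
Qed.

Lemma root_sign_change (phi : R -> R) (d l : R) :
  is_derive phi d l -> phi d = 0 -> l <> 0 ->
  forall eps, 0 < eps -> exists t, 0 < t < eps /\ 0 < l * phi (d + t) /\ l * phi (d - t) < 0.
Proof.
  intros D E Hl eps He. apply is_derive_Reals in D.
  assert (Hl2 : 0 < l * l) by (destruct (Rlt_or_le l 0); nra).
  destruct (D (l * l / (2 * Rabs l))) as [del Hdel].
  { apply Rdiv_lt_0_compat; [lra|]. pose proof (Rabs_pos_lt _ Hl). lra. }
  pose proof (Rmin_l del eps). pose proof (Rmin_r del eps).
  assert (0 < Rmin del eps) by (apply Rmin_pos; [apply cond_pos|lra]).
  set (t := Rmin del eps / 2) in *.
  assert (Ht : 0 < t) by (unfold t; lra).
  exists t. split; [unfold t; lra|].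
  assert (A1 := Hdel t ltac:(lra) ltac:(rewrite Rabs_pos_eq; unfold t; lra)).
  assert (A2 := Hdel (- t) ltac:(lra) ltac:(rewrite Rabs_Ropp, Rabs_pos_eq; unfold t; lra)).
  rewrite E, Rminus_0_r in A1, A2. replace (d + - t) with (d - t) in A2 by ring.
  set (q1 := phi (d + t) / t) in A1. set (q2 := phi (d - t) / - t) in A2.
  replace (phi (d + t)) with (q1 * t) by (unfold q1; field; lra).
  replace (phi (d - t)) with (- (q2 * t)) by (unfold q2; field; lra).
  assert (Hq : forall q, Rabs (q - l) < l * l / (2 * Rabs l) -> 0 < l * q).
  { intros q Hq. apply Rabs_def2 in Hq.
    destruct (Rlt_or_le l 0) as [Hn|Hp].
    - rewrite Rabs_left in Hq by lra.
      replace (l * l / (2 * - l)) with (- l / 2) in Hq by (field; lra). nra.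
    - rewrite Rabs_pos_eq in Hq by lra.
      replace (l * l / (2 * l)) with (l / 2) in Hq by (field; lra). nra. }
  pose proof (Hq q1 A1). pose proof (Hq q2 A2). nra.
Qed.

Section StrictConvexity.

Variables (phi dphi ddphi : R -> R).
Hypothesis phi_derive : forall q, is_derive phi q (dphi q).
Hypothesis dphi_derive : forall q, is_derive dphi q (ddphi q).
Hypothesis ddphi_pos : forall q, 0 < ddphi q.

Lemma dphi_increasing (a b : R) : a < b -> dphi a < dphi b.
Proof.
  intros Hab. destruct (mean_value dphi ddphi a b dphi_derive Hab) as [c [Hc E]].
  specialize (ddphi_pos c). nra.
Qed.

Lemma dphi_nondecreasing (a b : R) : a <= b -> dphi a <= dphi b.
Proof.
  intros Hab. destruct (Req_dec a b) as [->|Hne]; [lra|]. left; apply dphi_increasing; lra.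
Qed.

Lemma secant_slope_bounds (a b : R) : a < b ->
  dphi a * (b - a) < phi b - phi a < dphi b * (b - a).
Proof.
  intros Hab. set (m := (a + b) / 2).
  destruct (mean_value phi dphi a m phi_derive) as [c1 [Hc1 E1]]; [unfold m; lra|].
  destruct (mean_value phi dphi m b phi_derive) as [c2 [Hc2 E2]]; [unfold m; lra|].
  assert (dphi a <= dphi c1) by (apply dphi_nondecreasing; lra).
  assert (dphi a < dphi c2) by (apply dphi_increasing; unfold m in *; lra).
  assert (dphi c1 < dphi b) by (apply dphi_increasing; unfold m in *; lra).
  assert (dphi c2 <= dphi b) by (apply dphi_nondecreasing; lra).
  assert (m - a > 0) by (unfold m; lra). assert (b - m > 0) by (unfold m; lra).
  replace (phi b - phi a) with ((phi m - phi a) + (phi b - phi m)) by ring.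
  rewrite E1, E2. replace (b - a) with ((m - a) + (b - m)) by ring. split; nra.
Qed.

Lemma strict_tangent_below (a b : R) : a <> b -> phi a + dphi a * (b - a) < phi b.
Proof.
  intros Hne. destruct (Rlt_or_le a b) as [H|H].
  - pose proof (secant_slope_bounds a b H). lra.
  - pose proof (secant_slope_bounds b a ltac:(lra)). nra.
Qed.

Lemma strict_convexity (a m b : R) : a < m -> m < b ->
  phi m * (b - a) < (b - m) * phi a + (m - a) * phi b.
Proof.
  intros H1 H2.
  pose proof (strict_tangent_below m a ltac:(lra)) as T1.
  pose proof (strict_tangent_below m b ltac:(lra)) as T2.
  assert ((b - m) * (phi m + dphi m * (a - m)) < (b - m) * phi a)
    by (apply Rmult_lt_compat_l; lra).
  assert ((m - a) * (phi m + dphi m * (b - m)) < (m - a) * phi b)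
    by (apply Rmult_lt_compat_l; lra).
  nra.
Qed.

Lemma no_three_roots (a b c : R) : a < b -> b < c ->
  phi a = 0 -> phi b = 0 -> phi c = 0 -> False.
Proof.
  intros H1 H2 Ea Eb Ec. pose proof (strict_convexity a b c H1 H2) as C.
  rewrite Ea, Eb, Ec in C. lra.
Qed.

Lemma root_trapped (l c t D : R) : 0 < t -> phi D = 0 -> 0 < l * dphi D ->
  0 < l * phi (c + t) -> l * phi (c - t) < 0 -> Rabs (D - c) < t.
Proof.
  intros Ht E Hs Hp Hn.
  assert (Signs : (0 < dphi D /\ 0 < phi (c + t) /\ phi (c - t) < 0) \/
                  (dphi D < 0 /\ phi (c + t) < 0 /\ 0 < phi (c - t))).
  { destruct (Rlt_or_le l 0); [right|left]; repeat split; nra. }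
  apply Rabs_def1; apply Rnot_le_lt; intro Hle.
  - assert (Hne : D <> c + t) by (intro; subst D; lra).
    destruct Signs as [[S1 [S2 S3]]|[S1 [S2 S3]]].
    + pose proof (strict_convexity (c - t) (c + t) D ltac:(lra) ltac:(lra)). nra.
    + pose proof (strict_tangent_below D (c + t) ltac:(lra)). nra.
  - assert (Hne : D <> c - t) by (intro; subst D; lra).
    destruct Signs as [[S1 [S2 S3]]|[S1 [S2 S3]]].
    + pose proof (strict_tangent_below D (c - t) ltac:(lra)). nra.
    + pose proof (strict_convexity D (c - t) (c + t) ltac:(lra) ltac:(lra)). nra.
Qed.

End StrictConvexity.

(** * Regularity of the viscosity solution *)

Section ViscosityRegularity.

Variables (H : R -> R -> R -> R) (u : R -> R).
Hypothesis H_smooth : smooth3 H.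
Hypothesis H_per : forall x p v, H (x + 1) p v = H x p v.
Hypothesis H_conv : forall x p v, 0 < Hpp H x p v.
Hypothesis H_superlin : superlinear_p H.
Hypothesis u_visc : viscosity_solution H u.
Hypothesis u_nondeg : forall x, ex_derive u x -> Hp H x (Derive u x) (u x) <> 0.

Let u_periodic : periodic1 u := proj1 u_visc.
Let u_continuous : forall y, continuous u y := proj1 (proj2 u_visc).
Let u_subsolution : forall phi x, Defs.C1 phi -> local_max_at (fun y => u y - phi y) x ->
  H x (Derive phi x) (u x) <= 0 := proj1 (proj2 (proj2 u_visc)).
Let u_supersolution : forall phi x, Defs.C1 phi -> local_min_at (fun y => u y - phi y) x ->
  0 <= H x (Derive phi x) (u x) := proj2 (proj2 (proj2 u_visc)).

Local Notation F z p := (H z p (u z)).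

Lemma H_is_derive_p x p v : is_derive (fun q => H x q v) p (Hp H x p v).
Proof. exact (pderiv_is_derive_p H H_smooth nil x p v). Qed.

Lemma Hp_is_derive_p x p v : is_derive (fun q => Hp H x q v) p (Hpp H x p v).
Proof. exact (pderiv_is_derive_p H H_smooth (1%nat :: nil) x p v). Qed.

Lemma F_continuous z p eps : 0 < eps -> exists del, 0 < del /\ forall z' p',
  Rabs (z' - z) < del -> Rabs (p' - p) < del -> Rabs (F z' p' - F z p) < eps.
Proof.
  apply continuous3_comp_graph; [apply (pderiv_continuous3 H H_smooth nil)|exact u_continuous].
Qed.

Lemma F_pos_near z p : 0 < F z p -> exists del, 0 < del /\ forall z' p',
  Rabs (z' - z) < del -> Rabs (p' - p) < del -> 0 < F z' p'.
Proof.
  intros Hz. destruct (F_continuous z p (F z p) Hz) as [d [Hd HD]]. exists d; split; auto.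
  intros z' p' H1 H2. specialize (HD z' p' H1 H2). apply Rabs_def2 in HD. lra.
Qed.

Lemma F_neg_near z p : F z p < 0 -> exists del, 0 < del /\ forall z' p',
  Rabs (z' - z) < del -> Rabs (p' - p) < del -> F z' p' < 0.
Proof.
  intros Hz. destruct (F_continuous z p (- F z p)) as [d [Hd HD]]; [lra|]. exists d; split; auto.
  intros z' p' H1 H2. specialize (HD z' p' H1 H2). apply Rabs_def2 in HD. lra.
Qed.

Lemma F_strict_tangent_below z a b : a <> b -> F z a + Hp H z a (u z) * (b - a) < F z b.
Proof.
  apply (strict_tangent_below (fun q => F z q) (fun q => Hp H z q (u z)) (fun q => Hpp H z q (u z)));
    intros; [apply H_is_derive_p|apply Hp_is_derive_p|apply H_conv].
Qed.

Lemma F_strict_convexity z a m b : a < m -> m < b ->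
  F z m * (b - a) < (b - m) * F z a + (m - a) * F z b.
Proof.
  apply (strict_convexity (fun q => F z q) (fun q => Hp H z q (u z)) (fun q => Hpp H z q (u z)));
    intros; [apply H_is_derive_p|apply Hp_is_derive_p|apply H_conv].
Qed.

Lemma F_no_three_roots z a b c : a < b -> b < c ->
  F z a = 0 -> F z b = 0 -> F z c = 0 -> False.
Proof.
  apply (no_three_roots (fun q => F z q) (fun q => Hp H z q (u z)) (fun q => Hpp H z q (u z)));
    intros; [apply H_is_derive_p|apply Hp_is_derive_p|apply H_conv].
Qed.

Lemma F_root_trapped z l c t D : 0 < t -> F z D = 0 -> 0 < l * Hp H z D (u z) ->
  0 < l * F z (c + t) -> l * F z (c - t) < 0 -> Rabs (D - c) < t.
Proof.
  apply (root_trapped (fun q => F z q) (fun q => Hp H z q (u z)) (fun q => Hpp H z q (u z)));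
    intros; [apply H_is_derive_p|apply Hp_is_derive_p|apply H_conv].
Qed.

Lemma F_periodic z p : F (z + 1) p = F z p.
Proof. rewrite u_periodic, H_per. reflexivity. Qed.

Lemma F_coercive_near z0 : exists eta K, 0 < eta /\
  forall z p, Rabs (z - z0) < eta -> K <= Rabs p -> 0 < F z p.
Proof.
  set (M := Rabs (F z0 0) + 2).
  assert (HM : 0 < M) by (unfold M; pose proof (Rabs_pos (F z0 0)); lra).
  destruct (H_superlin z0 (u z0) M) as [R0 HR0].
  set (P := Rmax R0 1).
  assert (HP1 : 1 <= P) by apply Rmax_r.
  assert (FP : M <= F z0 P).
  { specialize (HR0 P). rewrite Rabs_pos_eq in HR0 by lra.
    assert (M * 1 <= M * P) by (apply Rmult_le_compat_l; lra).
    assert (M * P <= F z0 P) by (apply HR0; apply Rmax_l). lra. }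
  assert (FmP : M <= F z0 (- P)).
  { specialize (HR0 (- P)). rewrite Rabs_Ropp, Rabs_pos_eq in HR0 by lra.
    assert (M * 1 <= M * P) by (apply Rmult_le_compat_l; lra).
    assert (M * P <= F z0 (- P)) by (apply HR0; apply Rmax_l). lra. }
  destruct (F_continuous z0 P (1/2)) as [d1 [Hd1 HD1]]; [lra|].
  destruct (F_continuous z0 (- P) (1/2)) as [d2 [Hd2 HD2]]; [lra|].
  destruct (F_continuous z0 0 (1/2)) as [d3 [Hd3 HD3]]; [lra|].
  pose proof (Rmin_l d1 (Rmin d2 d3)). pose proof (Rmin_r d1 (Rmin d2 d3)).
  pose proof (Rmin_l d2 d3). pose proof (Rmin_r d2 d3).
  exists (Rmin d1 (Rmin d2 d3)), P. split; [repeat apply Rmin_pos; auto|].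
  intros z p Hz Hp.
  assert (A1 := HD1 z P ltac:(lra) ltac:(rewrite Rminus_eq_0, Rabs_R0; lra)).
  assert (A2 := HD2 z (- P) ltac:(lra) ltac:(rewrite Rminus_eq_0, Rabs_R0; lra)).
  assert (A3 := HD3 z 0 ltac:(lra) ltac:(rewrite Rminus_eq_0, Rabs_R0; lra)).
  apply Rabs_def2 in A1. apply Rabs_def2 in A2. apply Rabs_def2 in A3.
  pose proof (Rle_abs (F z0 0)). pose proof (Rabs_pos (F z0 0)). unfold M in *.
  destruct (Rle_or_lt 0 p) as [Hp0|Hp0].
  - rewrite Rabs_pos_eq in Hp by lra.
    destruct (Req_dec p P) as [->|Hne]; [lra|].
    pose proof (F_strict_convexity z 0 P p ltac:(lra) ltac:(lra)). nra.
  - rewrite Rabs_left in Hp by lra.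
    destruct (Req_dec p (- P)) as [->|Hne]; [lra|].
    pose proof (F_strict_convexity z p (- P) 0 ltac:(lra) ltac:(lra)). nra.
Qed.

Lemma F_coercive : exists K, 0 < K /\ forall z p, K <= Rabs p -> 0 < F z p.
Proof.
  destruct (uniform_bound_on_interval
      (fun _ K z => forall p, K <= Rabs p -> 0 < F z p) 0 1) as [_ [K [_ HK]]].
  - intros del K z del' K' HS _ HKK p Hp. apply HS. lra.
  - intros z _. destruct (F_coercive_near z) as [eta [K [He HK]]].
    exists eta, 1, K. split; auto. split; [lra|]. intros v Hv p Hp. apply HK; auto.
  - exists (Rmax K 1). split; [pose proof (Rmax_r K 1); lra|].
    intros z p Hp. destruct (periodic1_reduce (fun z => F z p) (fun z => F_periodic z p) z)
      as [y [Hy E]].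
    simpl in E. rewrite E. apply HK; auto. pose proof (Rmax_l K 1). lra.
Qed.

Lemma subsolution_affine z p c x1 :
  local_max_at (fun y => u y - (c + p * (y - x1))) z -> F z p <= 0.
Proof.
  intros Hl. pose proof (u_subsolution _ z (parabola_C1 c p 0 x1)) as E.
  rewrite Derive_parabola in E. replace (p + 2 * 0 * (z - x1)) with p in E by ring.
  apply E. eapply local_max_at_ext; [|exact Hl]. intros y. unfold parabola. ring.
Qed.

Lemma supersolution_affine z p c x1 :
  local_min_at (fun y => u y - (c + p * (y - x1))) z -> 0 <= F z p.
Proof.
  intros Hl. pose proof (u_supersolution _ z (parabola_C1 c p 0 x1)) as E.
  rewrite Derive_parabola in E. replace (p + 2 * 0 * (z - x1)) with p in E by ring.
  apply E. eapply local_min_at_ext; [|exact Hl]. intros y. unfold parabola. ring.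
Qed.

(* The maximum of [u y - L |y - x0|] on [x0 - 1, x0 + 1] must be at [x0]: elsewhere
   the subsolution test with slope [+-L] contradicts coercivity. *)
Lemma u_upper_lipschitz : exists L, 0 < L /\
  forall x0 y, Rabs (y - x0) <= 1 -> u y <= u x0 + L * Rabs (y - x0).
Proof.
  destruct F_coercive as [K [HK HKp]].
  destruct (periodic1_bounded u u_periodic) as [M0 HM0]; [intros; apply u_continuous|].
  assert (HM0p : 0 <= M0) by (pose proof (HM0 0); pose proof (Rabs_pos (u 0)); lra).
  set (L := K + 2 * M0 + 1). exists L. split; [unfold L; lra|].
  intros x0 y Hy.
  set (g := fun y => u y - L * Rabs (y - x0)).
  destruct (continuous_attains_max g (x0 - 1) (x0 + 1)) as [m [Hm HM]]; [lra| |].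
  { intros c _. apply (continuous_minus u (fun y => L * Rabs (y - x0))); [apply u_continuous|].
    apply (continuous_scal_r L (fun y => Rabs (y - x0))).
    apply (continuous_comp (fun y => y - x0) Rabs); [|apply continuous_Rabs].
    apply ex_derive_continuous_R. auto_derive. auto. }
  assert (Hgx0 : g x0 <= g m) by (apply HM; lra).
  unfold g in Hgx0. rewrite Rminus_eq_0, Rabs_R0 in Hgx0.
  pose proof (HM0 m) as B1. pose proof (HM0 x0) as B2.
  apply Rabs_le_between in B1. apply Rabs_le_between in B2.
  destruct (Rtotal_order m x0) as [Hlt|[Heq|Hgt]].
  - exfalso.
    assert (Hm1 : x0 - 1 < m).
    { apply Rnot_le_lt; intro Hle. assert (m = x0 - 1) by lra. subst m.
      rewrite Rabs_left1 in Hgx0 by lra. unfold L in Hgx0. lra. }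
    assert (Hl : local_max_at (fun y => u y - (0 + (- L) * (y - x0))) m).
    { apply (local_max_at_interior _ (x0 - 1) x0); [lra|]. intros c Hc.
      assert (Hg : g c <= g m) by (apply HM; lra). unfold g in Hg.
      rewrite !Rabs_left1 in Hg by lra. lra. }
    apply subsolution_affine in Hl. assert (0 < F m (- L)); [|lra]. apply HKp.
    rewrite Rabs_Ropp, Rabs_pos_eq; unfold L; lra.
  - subst m. assert (Hg : g y <= g x0) by (apply HM; apply Rabs_le_between' in Hy; lra).
    unfold g in Hg. rewrite Rminus_eq_0, Rabs_R0 in Hg. lra.
  - exfalso.
    assert (Hm1 : m < x0 + 1).
    { apply Rnot_le_lt; intro Hle. assert (m = x0 + 1) by lra. subst m.
      rewrite Rabs_pos_eq in Hgx0 by lra. unfold L in Hgx0. lra. }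
    assert (Hl : local_max_at (fun y => u y - (0 + L * (y - x0))) m).
    { apply (local_max_at_interior _ x0 (x0 + 1)); [lra|]. intros c Hc.
      assert (Hg : g c <= g m) by (apply HM; lra). unfold g in Hg.
      rewrite !Rabs_pos_eq in Hg by lra. lra. }
    apply subsolution_affine in Hl. assert (0 < F m L); [|lra]. apply HKp.
    rewrite Rabs_pos_eq; unfold L; lra.
Qed.

Lemma u_lipschitz : exists L, 0 < L /\
  forall x y, Rabs (y - x) <= 1 -> Rabs (u y - u x) <= L * Rabs (y - x).
Proof.
  destruct u_upper_lipschitz as [L [HL Up]]. exists L. split; auto. intros x y Hxy.
  pose proof (Up x y Hxy) as U1. rewrite Rabs_minus_sym in Hxy.
  pose proof (Up y x Hxy) as U2. rewrite Rabs_minus_sym in U2, Hxy. apply Rabs_le. lra.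
Qed.

Lemma u_right_deriv_exists x : exists d, is_right_deriv u x d.
Proof.
  destruct u_lipschitz as [L [HL HLip]].
  apply (viscosity_right_deriv_exists u (fun z p => F z p) x L).
  - exact u_continuous.
  - intros p eps He. destruct (F_continuous x p eps He) as [d [Hd HD]]. exists d; split; auto.
    intros z Hz. apply HD; auto. rewrite Rminus_eq_0, Rabs_R0; auto.
  - intros z p Hl. apply (subsolution_affine z p 0 0).
    eapply local_max_at_ext; [|exact Hl]. intros; simpl; ring.
  - intros z p Hl. apply (supersolution_affine z p 0 0).
    eapply local_min_at_ext; [|exact Hl]. intros; simpl; ring.
  - apply F_no_three_roots.
  - intros h Hh. specialize (HLip x (x + h)). replace (x + h - x) with h in HLip by ring.
    rewrite Rabs_pos_eq in HLip by lra. apply HLip. lra.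
Qed.

(* [y |-> u (- y)] is a viscosity solution of the reflected equation, whose right
   derivative at [- x] gives the left derivative of [u] at [x]. *)
Lemma u_left_deriv_exists x : exists e, is_left_deriv u x e.
Proof.
  destruct u_lipschitz as [L [HL HLip]].
  destruct (viscosity_right_deriv_exists (fun y => u (- y)) (fun z p => F (- z) (- p)) (- x) L)
    as [d Hd].
  - intros y. apply (continuous_comp Ropp u); [|apply u_continuous].
    apply ex_derive_continuous_R; auto_derive; auto.
  - intros p eps He. destruct (F_continuous x (- p) eps He) as [d [Hd HD]]. exists d; split; auto.
    intros z Hz. rewrite Ropp_involutive. apply HD.
    + replace (- z - x) with (- (z - - x)) by ring. rewrite Rabs_Ropp; auto.
    + rewrite Rminus_eq_0, Rabs_R0; auto.
  - intros z p [r [Hr Hl]]. apply (subsolution_affine (- z) (- p) 0 0). exists r. split; auto.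
    intros y Hy. specialize (Hl (- y)). rewrite !Ropp_involutive in Hl.
    assert (Rabs (- y - z) < r) by (replace (- y - z) with (- (y - - z)) by ring; rewrite Rabs_Ropp; auto).
    specialize (Hl ltac:(assumption)). lra.
  - intros z p [r [Hr Hl]]. apply (supersolution_affine (- z) (- p) 0 0). exists r. split; auto.
    intros y Hy. specialize (Hl (- y)). rewrite !Ropp_involutive in Hl.
    assert (Rabs (- y - z) < r) by (replace (- y - z) with (- (y - - z)) by ring; rewrite Rabs_Ropp; auto).
    specialize (Hl ltac:(assumption)). lra.
  - intros a b c H1 H2 E1 E2 E3. rewrite Ropp_involutive in *.
    apply (F_no_three_roots x (- c) (- b) (- a)); auto; lra.
  - intros h Hh. specialize (HLip x (x - h)). replace (x - h - x) with (- h) in HLip by ring.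
    rewrite Rabs_Ropp, Rabs_pos_eq in HLip by lra. replace (- (- x + h)) with (x - h) by ring.
    rewrite Ropp_involutive. apply HLip; lra.
  - exists (- d). apply is_left_deriv_reflect, Hd.
Qed.

(* Touching [u] from above by a parabola of curvature [2 eta / r] through [x1]:
   the maximum of the difference is interior, and its slope there is [3 eta]-close to [p]. *)
Lemma affine_upper_bound_subsolution x1 r eta p : 0 < r -> 0 < eta ->
  (forall y, Rabs (y - x1) <= r -> u y <= u x1 + p * (y - x1) + eta * r) ->
  exists y s, Rabs (y - x1) <= r /\ Rabs (s - p) <= 3 * eta /\ F y s <= 0.
Proof.
  intros Hr He Hy.
  set (k := 2 * eta / r).
  assert (Hkr : k * r = 2 * eta) by (unfold k; field; lra).
  assert (Hk : 0 < k) by (unfold k; apply Rdiv_lt_0_compat; lra).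
  set (g := fun y => u y - parabola (u x1) p k x1 y).
  destruct (continuous_attains_max g (x1 - r) (x1 + r)) as [m [Hm HM]]; [lra| |].
  { intros c _. apply (continuous_minus u (parabola (u x1) p k x1)); [apply u_continuous|].
    apply ex_derive_continuous_R. eexists; apply parabola_is_derive. }
  assert (Hg0 : g x1 <= g m) by (apply HM; lra).
  assert (Hbd : forall y, Rabs (y - x1) = r -> g y < 0).
  { intros y Hyr. unfold g, parabola. specialize (Hy y ltac:(lra)).
    assert ((y - x1) * (y - x1) = r * r) by (rewrite <- Hyr, <- Rabs_mult, Rabs_pos_eq; [ring|apply Rle_0_sqr]).
    nra. }
  assert (Hint : x1 - r < m < x1 + r).
  { unfold g, parabola in Hg0. split; apply Rnot_le_lt; intro Hle.
    - assert (g m < 0); [apply Hbd; replace (m - x1) with (- r) by lra|unfold g, parabola in *; nra].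
      rewrite Rabs_Ropp, Rabs_pos_eq; lra.
    - assert (g m < 0); [apply Hbd; replace (m - x1) with r by lra|unfold g, parabola in *; nra].
      rewrite Rabs_pos_eq; lra. }
  pose proof (u_subsolution _ m (parabola_C1 (u x1) p k x1)
    (local_max_at_interior _ (x1 - r) (x1 + r) m Hint HM)) as Hs.
  rewrite Derive_parabola in Hs.
  exists m, (p + 2 * k * (m - x1)). split; [apply Rabs_le; lra|]. split; auto.
  unfold g, parabola in Hg0. specialize (Hy m ltac:(apply Rabs_le; lra)).
  set (t := m - x1) in *.
  assert (Ht : t * t <= r * r / 2) by nra.
  replace (p + 2 * k * t - p) with (2 * k * t) by ring.
  apply Rabs_le. split; nra.
Qed.

Lemma affine_lower_bound_supersolution x1 r eta p : 0 < r -> 0 < eta ->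
  (forall y, Rabs (y - x1) <= r -> u x1 + p * (y - x1) - eta * r <= u y) ->
  exists y s, Rabs (y - x1) <= r /\ Rabs (s - p) <= 3 * eta /\ 0 <= F y s.
Proof.
  intros Hr He Hy.
  set (k := 2 * eta / r).
  assert (Hkr : k * r = 2 * eta) by (unfold k; field; lra).
  assert (Hk : 0 < k) by (unfold k; apply Rdiv_lt_0_compat; lra).
  set (g := fun y => u y - parabola (u x1) p (- k) x1 y).
  destruct (continuous_attains_min g (x1 - r) (x1 + r)) as [m [Hm HM]]; [lra| |].
  { intros c _. apply (continuous_minus u (parabola (u x1) p (- k) x1)); [apply u_continuous|].
    apply ex_derive_continuous_R. eexists; apply parabola_is_derive. }
  assert (Hg0 : g m <= g x1) by (apply HM; lra).
  assert (Hbd : forall y, Rabs (y - x1) = r -> 0 < g y).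
  { intros y Hyr. unfold g, parabola. specialize (Hy y ltac:(lra)).
    assert ((y - x1) * (y - x1) = r * r) by (rewrite <- Hyr, <- Rabs_mult, Rabs_pos_eq; [ring|apply Rle_0_sqr]).
    nra. }
  assert (Hint : x1 - r < m < x1 + r).
  { unfold g, parabola in Hg0. split; apply Rnot_le_lt; intro Hle.
    - assert (0 < g m); [apply Hbd; replace (m - x1) with (- r) by lra|unfold g, parabola in *; nra].
      rewrite Rabs_Ropp, Rabs_pos_eq; lra.
    - assert (0 < g m); [apply Hbd; replace (m - x1) with r by lra|unfold g, parabola in *; nra].
      rewrite Rabs_pos_eq; lra. }
  pose proof (u_supersolution _ m (parabola_C1 (u x1) p (- k) x1)
    (local_min_at_interior _ (x1 - r) (x1 + r) m Hint HM)) as Hs.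
  rewrite Derive_parabola in Hs.
  exists m, (p + 2 * - k * (m - x1)). split; [apply Rabs_le; lra|]. split; auto.
  unfold g, parabola in Hg0. specialize (Hy m ltac:(apply Rabs_le; lra)).
  set (t := m - x1) in *.
  assert (Ht : t * t <= r * r / 2) by nra.
  replace (p + 2 * - k * t - p) with (2 * - k * t) by ring.
  apply Rabs_le. split; nra.
Qed.

Lemma approximate_slope_root x0 d :
  (forall eps del, 0 < eps -> 0 < del -> exists x1 r, 0 < r /\ Rabs (x1 - x0) + r < del /\
     forall y, Rabs (y - x1) <= r -> Rabs (u y - u x1 - d * (y - x1)) <= eps * r) ->
  F x0 d = 0.
Proof.
  intros Hc.
  destruct (Rtotal_order (F x0 d) 0) as [Hlt|[Heq|Hgt]]; auto; exfalso.
  - destruct (F_neg_near x0 d Hlt) as [d1 [Hd1 HD1]].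
    destruct (Hc (d1 / 6) d1) as [x1 [r [Hr [Hx1 Hy]]]]; [lra|lra|].
    destruct (affine_lower_bound_supersolution x1 r (d1 / 6) d Hr ltac:(lra))
      as [y [s [Hy1 [Hs HF]]]].
    { intros y Hyy. specialize (Hy y Hyy). apply Rabs_le_between in Hy. lra. }
    assert (F y s < 0); [|lra]. apply HD1; [|lra].
    pose proof (Rabs_triang (y - x1) (x1 - x0)).
    replace (y - x1 + (x1 - x0)) with (y - x0) in * by ring. lra.
  - destruct (F_pos_near x0 d Hgt) as [d1 [Hd1 HD1]].
    destruct (Hc (d1 / 6) d1) as [x1 [r [Hr [Hx1 Hy]]]]; [lra|lra|].
    destruct (affine_upper_bound_subsolution x1 r (d1 / 6) d Hr ltac:(lra))
      as [y [s [Hy1 [Hs HF]]]].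
    { intros y Hyy. specialize (Hy y Hyy). apply Rabs_le_between in Hy. lra. }
    assert (0 < F y s); [|lra]. apply HD1; [|lra].
    pose proof (Rabs_triang (y - x1) (x1 - x0)).
    replace (y - x1 + (x1 - x0)) with (y - x0) in * by ring. lra.
Qed.

Lemma right_deriv_root x d : is_right_deriv u x d -> F x d = 0.
Proof.
  intros Hd. apply approximate_slope_root. intros eps del He Hdel.
  destruct (Hd (eps / 4)) as [d0 [Hd0 HD]]; [lra|].
  pose proof (Rmin_l d0 del). pose proof (Rmin_r d0 del).
  assert (0 < Rmin d0 del) by (apply Rmin_pos; lra).
  set (h := Rmin d0 del / 4) in *.
  exists (x + h), h. split; [unfold h; lra|]. split.
  { replace (x + h - x) with h by ring. rewrite Rabs_pos_eq; unfold h; lra. }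
  assert (Ha : forall y, x <= y <= x + 2 * h ->
            Rabs (u y - u x - d * (y - x)) <= eps / 4 * (y - x)).
  { intros y Hy. destruct (Req_dec y x) as [->|Hne].
    - replace (u x - u x - d * (x - x)) with 0 by ring. rewrite Rabs_R0. lra.
    - specialize (HD (y - x)). replace (x + (y - x)) with y in HD by ring.
      apply HD. unfold h in Hy. lra. }
  intros y Hy. apply Rabs_le_between' in Hy.
  assert (0 < h) by (unfold h; lra).
  pose proof (Ha y ltac:(lra)) as A1. pose proof (Ha (x + h) ltac:(lra)) as A2.
  apply Rabs_le_between in A1. apply Rabs_le_between in A2. apply Rabs_le_between.
  nra.
Qed.

Lemma left_deriv_root x d : is_left_deriv u x d -> F x d = 0.
Proof.
  intros Hd. apply approximate_slope_root. intros eps del He Hdel.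
  destruct (Hd (eps / 4)) as [d0 [Hd0 HD]]; [lra|].
  pose proof (Rmin_l d0 del). pose proof (Rmin_r d0 del).
  assert (0 < Rmin d0 del) by (apply Rmin_pos; lra).
  set (h := Rmin d0 del / 4) in *.
  exists (x - h), h. split; [unfold h; lra|]. split.
  { replace (x - h - x) with (- h) by ring. rewrite Rabs_Ropp, Rabs_pos_eq; unfold h; lra. }
  assert (Ha : forall y, x - 2 * h <= y <= x ->
            Rabs (u y - u x - d * (y - x)) <= eps / 4 * (x - y)).
  { intros y Hy. destruct (Req_dec y x) as [->|Hne].
    - replace (u x - u x - d * (x - x)) with 0 by ring. rewrite Rabs_R0. lra.
    - specialize (HD (x - y)). replace (x - (x - y)) with y in HD by ring.
      replace (u y - u x - d * (y - x)) with (u y - u x + d * (x - y)) by ring.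
      apply HD. unfold h in Hy. lra. }
  intros y Hy. apply Rabs_le_between' in Hy.
  assert (0 < h) by (unfold h; lra).
  pose proof (Ha y ltac:(lra)) as A1. pose proof (Ha (x - h) ltac:(lra)) as A2.
  apply Rabs_le_between in A1. apply Rabs_le_between in A2. apply Rabs_le_between.
  nra.
Qed.

(* A convex kink [e < d] would let the line of slope [(d + e) / 2] touch [u] from below
   at [x], while this slope is strictly between two roots of [F x], where [F x < 0]. *)
Lemma right_deriv_le_left_deriv x d e :
  is_right_deriv u x d -> is_left_deriv u x e -> d <= e.
Proof.
  intros Hd He. apply Rnot_lt_le. intro Hlt.
  set (c := (d + e) / 2).
  pose proof (right_deriv_root x d Hd) as R1. pose proof (left_deriv_root x e He) as R2.
  assert (Fc : F x c < 0).
  { pose proof (F_strict_convexity x e c d ltac:(unfold c; lra) ltac:(unfold c; lra)) as C.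
    rewrite R1, R2 in C. nra. }
  destruct (Hd (d - c)) as [d1 [Hd1 HD1]]; [unfold c; lra|].
  destruct (He (c - e)) as [d2 [Hd2 HD2]]; [unfold c; lra|].
  assert (Hl : local_min_at (fun y => u y - (0 + c * (y - x))) x).
  { exists (Rmin d1 d2). split; [apply Rmin_pos; auto|].
    pose proof (Rmin_l d1 d2). pose proof (Rmin_r d1 d2).
    intros y Hy. apply Rabs_def2 in Hy.
    destruct (Rtotal_order y x) as [Hyx|[->|Hyx]].
    - specialize (HD2 (x - y) ltac:(lra)). replace (x - (x - y)) with y in HD2 by ring.
      apply Rabs_le_between in HD2. nra.
    - lra.
    - specialize (HD1 (y - x) ltac:(lra)). replace (x + (y - x)) with y in HD1 by ring.
      apply Rabs_le_between in HD1. nra. }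
  apply supersolution_affine in Hl. lra.
Qed.

Lemma concave_kink_Hp_pos x d e : is_right_deriv u x d -> is_left_deriv u x e -> d < e ->
  0 < Hp H x e (u x).
Proof.
  intros Hd He Hlt. pose proof (right_deriv_root x d Hd). pose proof (left_deriv_root x e He).
  pose proof (F_strict_tangent_below x e d ltac:(lra)). nra.
Qed.

Lemma concave_kink_Hp_neg x d e : is_right_deriv u x d -> is_left_deriv u x e -> d < e ->
  Hp H x d (u x) < 0.
Proof.
  intros Hd He Hlt. pose proof (right_deriv_root x d Hd). pose proof (left_deriv_root x e He).
  pose proof (F_strict_tangent_below x d e ltac:(lra)). nra.
Qed.

Definition decreasing_branch (x : R) : Prop :=
  forall d, is_right_deriv u x d -> Hp H x d (u x) < 0.

Definition increasing_branch (x : R) : Prop :=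
  forall d, is_right_deriv u x d -> 0 < Hp H x d (u x).

Lemma branches_disjoint x : decreasing_branch x -> increasing_branch x -> False.
Proof.
  intros H1 H2. destruct (u_right_deriv_exists x) as [d Hd].
  specialize (H1 d Hd). specialize (H2 d Hd). lra.
Qed.

Lemma branch_dichotomy x : decreasing_branch x \/ increasing_branch x.
Proof.
  destruct (u_right_deriv_exists x) as [d Hd]. destruct (u_left_deriv_exists x) as [e He].
  assert (Huniq : forall d', is_right_deriv u x d' -> d' = d)
    by (intros; eapply is_right_deriv_unique; eauto).
  destruct (Req_dec d e) as [<-|Hne].
  - pose proof (is_derive_of_right_left u x d Hd He) as Hder.
    pose proof (u_nondeg x (ex_intro _ d Hder)) as Hn. rewrite (is_derive_unique _ _ _ Hder) in Hn.
    destruct (Rtotal_order (Hp H x d (u x)) 0) as [Hl|[Hz|Hg]]; [left|contradiction|right];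
      intros d' Hd'; rewrite (Huniq d' Hd'); auto.
  - left. intros d' Hd'. rewrite (Huniq d' Hd').
    apply (concave_kink_Hp_neg x d e Hd He).
    pose proof (right_deriv_le_left_deriv x d e Hd He). lra.
Qed.

(* Where [F z c < 0] the line of slope [c] cannot touch [u] from below, so once [u]
   minus that line has decreased it cannot increase again. *)
Lemma graph_minus_line_nonincreasing x c h :
  (forall z, x < z < x + h -> F z c < 0) ->
  (forall s, 0 < s < h -> u (x + s) - c * s < u x) ->
  forall z1 z2, x < z1 -> z1 < z2 -> z2 < x + h ->
  u z2 - c * (z2 - x) <= u z1 - c * (z1 - x).
Proof.
  intros Hneg Hdec z1 z2 Hz1 Hz12 Hz2. apply Rnot_lt_le. intro Hlt.
  set (g := fun y => u y - (0 + c * (y - x))).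
  destruct (continuous_attains_min g x z2) as [m [Hm HM]]; [lra| |].
  { intros y _. apply (continuous_minus u (fun y => 0 + c * (y - x))); [apply u_continuous|].
    apply ex_derive_continuous_R. auto_derive. auto. }
  unfold g in HM.
  destruct (Req_dec m z2) as [->|Hmz2]; [specialize (HM z1 ltac:(lra)); lra|].
  destruct (Req_dec m x) as [->|Hmx].
  { specialize (HM (x + (z1 - x) / 2) ltac:(lra)). specialize (Hdec ((z1 - x) / 2) ltac:(lra)).
    replace (x + (z1 - x) / 2 - x) with ((z1 - x) / 2) in HM by ring. lra. }
  assert (Hl : local_min_at g m) by (apply (local_min_at_interior g x z2); auto; lra).
  apply supersolution_affine in Hl. specialize (Hneg m ltac:(lra)). lra.
Qed.

Lemma graph_minus_line_nondecreasing x c h :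
  (forall z, x - h < z < x -> F z c < 0) ->
  (forall s, 0 < s < h -> u (x - s) + c * s < u x) ->
  forall z1 z2, x - h < z1 -> z1 < z2 -> z2 < x ->
  u z1 - c * (z1 - x) <= u z2 - c * (z2 - x).
Proof.
  intros Hneg Hdec z1 z2 Hz1 Hz12 Hz2. apply Rnot_lt_le. intro Hlt.
  set (g := fun y => u y - (0 + c * (y - x))).
  destruct (continuous_attains_min g z1 x) as [m [Hm HM]]; [lra| |].
  { intros y _. apply (continuous_minus u (fun y => 0 + c * (y - x))); [apply u_continuous|].
    apply ex_derive_continuous_R. auto_derive. auto. }
  unfold g in HM.
  destruct (Req_dec m z1) as [->|Hmz1]; [specialize (HM z2 ltac:(lra)); lra|].
  destruct (Req_dec m x) as [->|Hmx].
  { specialize (HM (x - (x - z2) / 2) ltac:(lra)). specialize (Hdec ((x - z2) / 2) ltac:(lra)).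
    replace (x - (x - z2) / 2 - x) with (- ((x - z2) / 2)) in HM by ring. lra. }
  assert (Hl : local_min_at g m) by (apply (local_min_at_interior g z1 x); auto; lra).
  apply supersolution_affine in Hl. specialize (Hneg m ltac:(lra)). lra.
Qed.

(* Past [x] the graph of [u] stays below the line of slope [c = d + t] through
   [(x, u x)], where [F x c < 0]; hence right derivatives near [x] are at most [c],
   and a root of the strictly convex [F w] below a negative value lies on its
   decreasing branch. *)
Lemma decreasing_branch_right_open x : decreasing_branch x ->
  exists h, 0 < h /\ forall w, x < w < x + h -> decreasing_branch w.
Proof.
  intros HT. destruct (u_right_deriv_exists x) as [d Hd]. pose proof (HT d Hd) as Hneg.
  destruct (root_sign_change (fun q => F x q) d _ (H_is_derive_p x d (u x))
              (right_deriv_root x d Hd) ltac:(lra) 1 Rlt_0_1) as [t [Ht [Fc _]]].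
  set (c := d + t) in *.
  destruct (F_neg_near x c ltac:(nra)) as [d1 [Hd1 HD1]].
  destruct (Hd (t / 2)) as [d2 [Hd2 HD2]]; [lra|].
  pose proof (Rmin_l d1 d2). pose proof (Rmin_r d1 d2).
  assert (0 < Rmin d1 d2) by (apply Rmin_pos; auto).
  set (h := Rmin d1 d2) in *.
  assert (HF : forall z, Rabs (z - x) < h -> F z c < 0)
    by (intros z Hz; apply HD1; [lra|rewrite Rminus_eq_0, Rabs_R0; lra]).
  pose proof (graph_minus_line_nonincreasing x c h
    ltac:(intros z Hz; apply HF, Rabs_def1; lra)
    ltac:(intros s Hs; specialize (HD2 s ltac:(lra)); apply Rabs_le_between in HD2;
          unfold c in *; nra)) as Mono.
  exists h. split; auto. intros w Hw d' Hd'.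
  assert (Hle : d' <= c).
  { apply Rnot_lt_le. intro Hlt. destruct (Hd' ((d' - c) / 2)) as [d3 [Hd3 HD3]]; [lra|].
    pose proof (Rmin_l d3 (x + h - w)). pose proof (Rmin_r d3 (x + h - w)).
    assert (0 < Rmin d3 (x + h - w)) by (apply Rmin_pos; lra).
    set (s := Rmin d3 (x + h - w) / 2) in *.
    specialize (HD3 s ltac:(unfold s; lra)). apply Rabs_le_between in HD3.
    pose proof (Mono w (w + s) ltac:(lra) ltac:(unfold s; lra) ltac:(unfold s; lra)).
    assert (0 < s) by (unfold s; lra). nra. }
  pose proof (right_deriv_root w d' Hd') as Hr'.
  assert (Fwc : F w c < 0) by (apply HF, Rabs_def1; lra).
  assert (Hne : d' <> c) by (intro E; rewrite E in Hr'; lra).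
  pose proof (F_strict_tangent_below w d' c Hne). nra.
Qed.

Lemma left_deriv_increasing_left_open x e : is_left_deriv u x e -> 0 < Hp H x e (u x) ->
  exists h, 0 < h /\ forall w, x - h < w < x -> increasing_branch w.
Proof.
  intros He Hpos.
  destruct (root_sign_change (fun q => F x q) e _ (H_is_derive_p x e (u x))
              (left_deriv_root x e He) ltac:(lra) 1 Rlt_0_1) as [t [Ht [_ Fc]]].
  set (c := e - t) in *.
  destruct (F_neg_near x c ltac:(nra)) as [d1 [Hd1 HD1]].
  destruct (He (t / 2)) as [d2 [Hd2 HD2]]; [lra|].
  pose proof (Rmin_l d1 d2). pose proof (Rmin_r d1 d2).
  assert (0 < Rmin d1 d2) by (apply Rmin_pos; auto).
  set (h := Rmin d1 d2) in *.
  assert (HF : forall z, Rabs (z - x) < h -> F z c < 0)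
    by (intros z Hz; apply HD1; [lra|rewrite Rminus_eq_0, Rabs_R0; lra]).
  pose proof (graph_minus_line_nondecreasing x c h
    ltac:(intros z Hz; apply HF, Rabs_def1; lra)
    ltac:(intros s Hs; specialize (HD2 s ltac:(lra)); apply Rabs_le_between in HD2;
          unfold c in *; nra)) as Mono.
  exists h. split; auto. intros w Hw d' Hd'.
  assert (Hle : c <= d').
  { apply Rnot_lt_le. intro Hlt. destruct (Hd' ((c - d') / 2)) as [d3 [Hd3 HD3]]; [lra|].
    pose proof (Rmin_l d3 (x - w)). pose proof (Rmin_r d3 (x - w)).
    assert (0 < Rmin d3 (x - w)) by (apply Rmin_pos; lra).
    set (s := Rmin d3 (x - w) / 2) in *.
    specialize (HD3 s ltac:(unfold s; lra)). apply Rabs_le_between in HD3.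
    pose proof (Mono w (w + s) ltac:(lra) ltac:(unfold s; lra) ltac:(unfold s; lra)).
    assert (0 < s) by (unfold s; lra). nra. }
  pose proof (right_deriv_root w d' Hd') as Hr'.
  assert (Fwc : F w c < 0) by (apply HF, Rabs_def1; lra).
  assert (Hne : d' <> c) by (intro E; rewrite E in Hr'; lra).
  pose proof (F_strict_tangent_below w d' c Hne). nra.
Qed.

Lemma increasing_branch_left_open x : increasing_branch x ->
  exists h, 0 < h /\ forall w, x - h < w < x -> increasing_branch w.
Proof.
  intros Hx. destruct (u_right_deriv_exists x) as [d Hd].
  destruct (u_left_deriv_exists x) as [e He].
  apply (left_deriv_increasing_left_open x e He).
  pose proof (right_deriv_le_left_deriv x d e Hd He).
  destruct (Req_dec d e) as [<-|Hne]; [apply Hx, Hd|].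
  apply (concave_kink_Hp_pos x d e); auto; lra.
Qed.

Lemma increasing_branch_periodic x : increasing_branch (x + 1) <-> increasing_branch x.
Proof.
  pose proof (Hp_periodic H H_per x) as Hp_per. unfold increasing_branch. split; intros HT d Hd.
  - rewrite <- u_periodic, <- Hp_per. apply HT, is_right_deriv_periodic1; auto.
  - rewrite u_periodic, Hp_per. apply HT. apply (is_right_deriv_periodic1 u x d u_periodic), Hd.
Qed.

Lemma branches_not_both b a : decreasing_branch b -> increasing_branch a -> False.
Proof.
  intros Hb Ha. destruct (archimed (b - a)) as [A1 _].
  apply (no_switch decreasing_branch increasing_branch b (a + IZR (up (b - a)))).
  - lra.
  - exact branch_dichotomy.
  - exact branches_disjoint.
  - exact decreasing_branch_right_open.
  - exact increasing_branch_left_open.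
  - exact Hb.
  - apply shift_Z_of_shift_1; [exact increasing_branch_periodic|exact Ha].
Qed.

Lemma branch_constant :
  (forall x, decreasing_branch x) \/ (forall x, increasing_branch x).
Proof.
  destruct (classic (exists a, increasing_branch a)) as [[a Ha]|Hn].
  - right. intros x. destruct (branch_dichotomy x) as [Hx|Hx]; auto.
    exfalso; eapply branches_not_both; eauto.
  - left. intros x. destruct (branch_dichotomy x) as [Hx|Hx]; auto.
    exfalso; apply Hn; eauto.
Qed.

Lemma u_is_derive x : is_right_deriv u x (Derive u x) /\ is_derive u x (Derive u x).
Proof.
  destruct (u_right_deriv_exists x) as [d Hd]. destruct (u_left_deriv_exists x) as [e He].
  pose proof (right_deriv_le_left_deriv x d e Hd He) as Hde.
  destruct (Req_dec d e) as [<-|Hne].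
  - pose proof (is_derive_of_right_left u x d Hd He) as Hder.
    rewrite (is_derive_unique _ _ _ Hder). auto.
  - exfalso.
    assert (Hx : decreasing_branch x).
    { intros d' Hd'. rewrite (is_right_deriv_unique u x d' d Hd' Hd).
      apply (concave_kink_Hp_neg x d e); auto; lra. }
    destruct (left_deriv_increasing_left_open x e He
                (concave_kink_Hp_pos x d e Hd He ltac:(lra))) as [h [Hh HL]].
    apply (branches_not_both x (x - h / 2)); auto. apply HL. lra.
Qed.

Lemma u_classical x : H x (Derive u x) (u x) = 0.
Proof. apply right_deriv_root, u_is_derive. Qed.

Lemma Derive_u_continuous x : continuous (Derive u) x.
Proof.
  set (D0 := Derive u x). set (l := Hp H x D0 (u x)).
  assert (Hsign : forall w, 0 < l * Hp H w (Derive u w) (u w)).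
  { intros w. destruct branch_constant as [Hall|Hall].
    - pose proof (Hall x D0 (proj1 (u_is_derive x))).
      pose proof (Hall w _ (proj1 (u_is_derive w))). unfold l. nra.
    - pose proof (Hall x D0 (proj1 (u_is_derive x))).
      pose proof (Hall w _ (proj1 (u_is_derive w))). unfold l. nra. }
  assert (Hl : l <> 0) by (intro E; specialize (Hsign x); rewrite E in Hsign; lra).
  apply continuous_epsilon_delta. intros eps He.
  destruct (root_sign_change (fun q => F x q) D0 l (H_is_derive_p x D0 (u x))
              (u_classical x) Hl eps He) as [t [Ht [Fp Fn]]].
  destruct (F_continuous x (D0 + t) (Rabs (F x (D0 + t)))) as [d1 [Hd1 HD1]].
  { apply Rabs_pos_lt. intro E. rewrite E in Fp. lra. }
  destruct (F_continuous x (D0 - t) (Rabs (F x (D0 - t)))) as [d2 [Hd2 HD2]].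
  { apply Rabs_pos_lt. intro E. rewrite E in Fn. lra. }
  exists (Rmin d1 d2). split; [apply Rmin_pos; auto|].
  pose proof (Rmin_l d1 d2). pose proof (Rmin_r d1 d2).
  intros w Hw. apply Rlt_trans with t; [|lra].
  apply (F_root_trapped w l D0 t); [lra|apply u_classical|apply Hsign| |].
  - apply (mul_pos_of_close l (F x (D0 + t))); auto.
    apply HD1; [lra|rewrite Rminus_eq_0, Rabs_R0; lra].
  - assert (0 < l * - F w (D0 - t)); [|lra].
    apply (mul_pos_of_close l (- F x (D0 - t))); [lra|].
    replace (- F w (D0 - t) - - F x (D0 - t)) with (- (F w (D0 - t) - F x (D0 - t))) by ring.
    rewrite !Rabs_Ropp. apply HD2; [lra|rewrite Rminus_eq_0, Rabs_R0; lra].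
Qed.

End ViscosityRegularity.

(** * Second-order bound on the Hamiltonian *)

Lemma lipschitz_of_bounded_derive (g dg : R -> R) (p K : R) :
  (forall q, is_derive g q (dg q)) -> (forall q, Rabs (q - p) <= 1 -> Rabs (dg q) <= K) ->
  forall q1 q2, Rabs (q1 - p) <= 1 -> Rabs (q2 - p) <= 1 ->
  Rabs (g q1 - g q2) <= K * Rabs (q1 - q2).
Proof.
  intros Hd Hb.
  assert (Hlt : forall q1 q2, q1 < q2 -> Rabs (q1 - p) <= 1 -> Rabs (q2 - p) <= 1 ->
            Rabs (g q2 - g q1) <= K * Rabs (q2 - q1)).
  { intros q1 q2 Hl H1 H2. destruct (mean_value g dg q1 q2 Hd Hl) as [c [Hc E]].
    rewrite E, Rabs_mult. apply Rmult_le_compat_r; [apply Rabs_pos|]. apply Hb.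
    apply Rabs_le_between' in H1. apply Rabs_le_between' in H2. apply Rabs_le_between'. lra. }
  intros q1 q2 H1 H2. destruct (Rtotal_order q1 q2) as [Hl|[->|Hg]].
  - rewrite (Rabs_minus_sym (g q1)), (Rabs_minus_sym q1). apply Hlt; auto.
  - rewrite !Rminus_eq_0, Rabs_R0. lra.
  - apply Hlt; auto.
Qed.

Lemma taylor_second_order (f df ddf : R -> R) (p K a : R) : 0 <= K ->
  (forall q, is_derive f q (df q)) -> (forall q, is_derive df q (ddf q)) ->
  (forall q, Rabs (q - p) <= 1 -> Rabs (ddf q) <= K) ->
  Rabs a <= 1 -> Rabs (f (p + a) - f p - df p * a) <= K * (a * a).
Proof.
  intros HK0 Hd Hdd Hb Ha.
  pose proof (lipschitz_of_bounded_derive df ddf p K Hdd Hb) as HL.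
  assert (Main : forall c, Rabs (c - p) <= Rabs a -> f (p + a) - f p = df c * a ->
     Rabs (f (p + a) - f p - df p * a) <= K * (a * a)).
  { intros c Hc E. rewrite E. replace (df c * a - df p * a) with ((df c - df p) * a) by ring.
    rewrite Rabs_mult. specialize (HL c p ltac:(lra) ltac:(rewrite Rminus_eq_0, Rabs_R0; lra)).
    replace (a * a) with (Rabs a * Rabs a) by (rewrite <- Rabs_mult, Rabs_pos_eq; nra).
    assert (K * Rabs (c - p) <= K * Rabs a) by (apply Rmult_le_compat_l; auto).
    pose proof (Rabs_pos a). nra. }
  destruct (Rtotal_order a 0) as [Hn|[->|Hp]].
  - destruct (mean_value f df (p + a) p Hd ltac:(lra)) as [c [Hc E]].
    apply (Main c); [|lra].
    rewrite (Rabs_left a) by lra. apply Rabs_le_between'. lra.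
  - rewrite Rplus_0_r. replace (f p - f p - df p * 0) with 0 by ring. rewrite Rabs_R0. nra.
  - destruct (mean_value f df p (p + a) Hd ltac:(lra)) as [c [Hc E]].
    apply (Main c); [|rewrite E; ring].
    rewrite (Rabs_pos_eq a) by lra. apply Rabs_le_between'. lra.
Qed.

Lemma Rabs_mult_le_sum_squares (a b : R) : Rabs a * Rabs b <= a * a + b * b.
Proof.
  pose proof (Rabs_pos a). pose proof (Rabs_pos b).
  rewrite <- (Rabs_pos_eq (a * a)), <- (Rabs_pos_eq (b * b)), !Rabs_mult by nra. nra.
Qed.

Section SecondOrderBound.

Variable H : R -> R -> R -> R.
Hypothesis H_smooth : smooth3 H.
Hypothesis H_per : forall x p v, H (x + 1) p v = H x p v.

Lemma pderiv_bounded (l : list nat) : List.Forall (fun i => i <> 0%nat) l -> forall P V,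
  exists K, 0 <= K /\ forall x p v, Rabs p <= P -> Rabs v <= V -> Rabs (pderiv l H x p v) <= K.
Proof.
  intros Hl P V.
  destruct (continuous3_bounded_on_box (pderiv l H) (pderiv_continuous3 H H_smooth l)
              0 1 (- P) P (- V) V) as [K0 HK0].
  exists (Rmax K0 0). split; [apply Rmax_r|]. intros x p v Hpb Hvb.
  destruct (periodic1_reduce (fun x => pderiv l H x p v)
              (fun x => pderiv_periodic H l H_per Hl x p v) x) as [y [Hy E]].
  simpl in E. rewrite E. eapply Rle_trans; [|apply Rmax_l].
  apply HK0; auto; apply Rabs_le_between; auto.
Qed.

(* Uniform in [x] by periodicity. *)
Lemma H_second_order_upper_bound P V : exists K, 0 <= K /\ forall x p v a b,
  Rabs p <= P -> Rabs v <= V -> Rabs a <= 1 -> Rabs b <= 1 ->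
  H x (p + a) (v + b) <= H x p v + Hp H x p v * a + Hu H x p v * b + K * (a * a + b * b).
Proof.
  destruct (pderiv_bounded (1 :: 1 :: nil)%nat ltac:(repeat constructor; discriminate)
              (Rabs P + 2) (Rabs V + 2)) as [K1 [HK1 B1]].
  destruct (pderiv_bounded (2 :: 2 :: nil)%nat ltac:(repeat constructor; discriminate)
              (Rabs P + 2) (Rabs V + 2)) as [K2 [HK2 B2]].
  destruct (pderiv_bounded (1 :: 2 :: nil)%nat ltac:(repeat constructor; discriminate)
              (Rabs P + 2) (Rabs V + 2)) as [K3 [HK3 B3]].
  exists (K1 + K2 + K3). split; [lra|]. intros x p v a b Hpb Hvb Ha Hb.
  pose proof (Rle_abs P). pose proof (Rle_abs V).
  assert (Hpa : Rabs (p + a) <= Rabs P + 1) by (pose proof (Rabs_triang p a); lra).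
  assert (SA : Rabs (H x (p + a) v - H x p v - Hp H x p v * a) <= K1 * (a * a)).
  { apply (taylor_second_order (fun q => H x q v) (fun q => Hp H x q v)
             (fun q => pderiv (1 :: 1 :: nil)%nat H x q v)); auto.
    - intros q. exact (pderiv_is_derive_p H H_smooth nil x q v).
    - intros q. exact (pderiv_is_derive_p H H_smooth (1 :: nil)%nat x q v).
    - intros q Hq. apply B1; [pose proof (Rabs_triang_inv q p)|]; lra. }
  assert (SB : Rabs (H x (p + a) (v + b) - H x (p + a) v - Hu H x (p + a) v * b) <= K2 * (b * b)).
  { apply (taylor_second_order (fun w => H x (p + a) w) (fun w => Hu H x (p + a) w)
             (fun w => pderiv (2 :: 2 :: nil)%nat H x (p + a) w)); auto.
    - intros w. exact (pderiv_is_derive_u H H_smooth nil x (p + a) w).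
    - intros w. exact (pderiv_is_derive_u H H_smooth (2 :: nil)%nat x (p + a) w).
    - intros w Hw. apply B2; [|pose proof (Rabs_triang_inv w v)]; lra. }
  assert (SC : Rabs (Hu H x (p + a) v - Hu H x p v) <= K3 * Rabs a).
  { replace (Rabs a) with (Rabs (p + a - p)) by (f_equal; ring).
    apply (lipschitz_of_bounded_derive (fun q => Hu H x q v)
             (fun q => pderiv (1 :: 2 :: nil)%nat H x q v) p K3).
    - intros q. exact (pderiv_is_derive_p H H_smooth (2 :: nil)%nat x q v).
    - intros q Hq. apply B3; [pose proof (Rabs_triang_inv q p)|]; lra.
    - replace (p + a - p) with a by ring. exact Ha.
    - rewrite Rminus_eq_0, Rabs_R0; lra. }
  apply Rabs_le_between in SA. apply Rabs_le_between in SB.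
  assert (SC' : Rabs ((Hu H x (p + a) v - Hu H x p v) * b) <= K3 * Rabs a * Rabs b).
  { rewrite Rabs_mult. apply Rmult_le_compat_r; auto. apply Rabs_pos. }
  apply Rabs_le_between in SC'.
  pose proof (Rabs_mult_le_sum_squares a b).
  assert (K3 * Rabs a * Rabs b <= K3 * (a * a + b * b))
    by (rewrite Rmult_assoc; apply Rmult_le_compat_l; auto).
  assert (K1 * (a * a) <= K1 * (a * a + b * b)) by (apply Rmult_le_compat_l; nra).
  assert (K2 * (b * b) <= K2 * (a * a + b * b)) by (apply Rmult_le_compat_l; nra).
  lra.
Qed.

End SecondOrderBound.

(** * The time-periodic subsolution *)

Lemma ex_RInt_continuous_R (f : R -> R) a b : (forall x, continuous f x) -> ex_RInt f a b.
Proof. intros Hc. apply (ex_RInt_continuous (V := R_CompleteNormedModule)). intros; apply Hc. Qed.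

Lemma is_derive_RInt_0 (f : R -> R) x : (forall y, continuous f y) ->
  is_derive (fun y => RInt f 0 y) x (f x).
Proof.
  intros Hc. apply (is_derive_RInt (V := R_CompleteNormedModule) f (fun y => RInt f 0 y) 0 x).
  - apply filter_forall. intros b. apply (RInt_correct (V := R_CompleteNormedModule)).
    apply ex_RInt_continuous_R, Hc.
  - apply Hc.
Qed.

Lemma RInt_scal_minus (f g : R -> R) a b m : ex_RInt f a b -> ex_RInt g a b ->
  RInt (fun t => m * f t - g t) a b = m * RInt f a b - RInt g a b.
Proof.
  intros Hf Hg.
  apply (is_RInt_unique (V := R_CompleteNormedModule)).
  apply (is_RInt_minus (V := R_NormedModule) (fun t => m * f t) g).
  - apply (is_RInt_scal (V := R_NormedModule) f).
    apply (RInt_correct (V := R_CompleteNormedModule)), Hf.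
  - apply (RInt_correct (V := R_CompleteNormedModule)), Hg.
Qed.

Lemma RInt_0_periodic1 (f : R -> R) : (forall x, continuous f x) -> periodic1 f ->
  RInt f 0 1 = 0 -> periodic1 (fun x => RInt f 0 x).
Proof.
  intros Hc Hp H0 x. simpl.
  rewrite <- (RInt_Chasles (V := R_CompleteNormedModule) f 0 1 (x + 1))
    by (apply ex_RInt_continuous_R; auto).
  rewrite H0.
  assert (E : RInt f 1 (x + 1) = RInt f 0 x).
  { pose proof (RInt_comp_lin (V := R_CompleteNormedModule) f 1 1 0 x) as E.
    replace (1 * 0 + 1) with 1 in E by ring. replace (1 * x + 1) with (x + 1) in E by ring.
    rewrite <- E by (apply ex_RInt_continuous_R; auto). apply RInt_ext. intros y _.
    replace (1 * y + 1) with (y + 1) by ring. rewrite Hp. unfold scal; simpl. unfold mult; simpl. ring. }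
  change (0 + RInt f 1 (x + 1) = RInt f 0 x). rewrite E. ring.
Qed.

Lemma trig_perturbation_abs_bounds (eps r dr df S C rmax M1 M2 : R) :
  0 <= eps -> 0 <= r <= rmax -> Rabs dr <= M1 -> Rabs df <= M2 -> S * S + C * C = 1 ->
  Rabs (eps * dr * (1 + S) + eps * r * (C * df)) <= eps * (2 * M1 + rmax * M2) /\
  Rabs (eps * r * (1 + S)) <= eps * (2 * rmax).
Proof.
  intros He Hr Hdr Hdf HSC.
  assert (Hs : 0 <= 1 + S <= 2) by nra.
  assert (HCa : Rabs C <= 1) by (apply Rabs_le; nra).
  pose proof (Rabs_pos dr). pose proof (Rabs_pos df). pose proof (Rabs_pos C).
  split.
  - eapply Rle_trans; [apply Rabs_triang|].
    rewrite !Rabs_mult, (Rabs_pos_eq eps), (Rabs_pos_eq r), (Rabs_pos_eq (1 + S)) by lra.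
    assert (Rabs dr * (1 + S) <= M1 * 2) by (apply Rmult_le_compat; lra).
    assert (Rabs C * Rabs df <= 1 * M2) by (apply Rmult_le_compat; lra).
    assert (r * (Rabs C * Rabs df) <= rmax * M2) by (apply Rmult_le_compat; nra).
    nra.
  - rewrite !Rabs_mult, (Rabs_pos_eq eps), (Rabs_pos_eq r), (Rabs_pos_eq (1 + S)) by lra.
    assert (r * (1 + S) <= rmax * 2) by (apply Rmult_le_compat; lra). nra.
Qed.

(* Since [C ^ 2 = (1 - S) (1 + S) <= 2 (1 + S)], the squares of the perturbations are
   [O(eps ^ 2 (1 + S))]: they vanish to second order exactly where the leading term
   [eps mu rho (1 + S)] of the Hamilton-Jacobi expression does. *)
Lemma trig_perturbation_square_bound (eps r dr df S C rmax M1 M2 : R) :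
  0 <= r <= rmax -> Rabs dr <= M1 -> Rabs df <= M2 -> S * S + C * C = 1 ->
  let a := eps * dr * (1 + S) + eps * r * (C * df) in
  let b := eps * r * (1 + S) in
  a * a + b * b <= eps * eps * (1 + S) *
                   (4 * (M1 * M1) + 4 * (rmax * rmax) * (M2 * M2) + 2 * (rmax * rmax)).
Proof.
  intros Hr Hdr Hdf HSC a b.
  set (s := 1 + S) in *.
  assert (Hs : 0 <= s <= 2) by (unfold s; nra).
  assert (HC : C * C <= 2 * s) by (unfold s; nra).
  assert (Sq : forall y M, Rabs y <= M -> y * y <= M * M).
  { intros y M Hy. pose proof (Rabs_pos y).
    replace (y * y) with (Rabs y * Rabs y) by (rewrite <- Rabs_mult; apply Rabs_pos_eq; nra).
    nra. }
  pose proof (Sq dr M1 Hdr). pose proof (Sq df M2 Hdf).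
  assert (E1 : a * a <= 2 * ((eps * dr * s) * (eps * dr * s))
                       + 2 * ((eps * r * (C * df)) * (eps * r * (C * df)))).
  { unfold a. pose proof (Rle_0_sqr (eps * dr * s - eps * r * (C * df))). unfold Rsqr in *. nra. }
  assert (r * r <= rmax * rmax) by nra.
  assert (s * s <= 2 * s) by nra.
  assert (T1 : (eps * dr * s) * (eps * dr * s) <= eps * eps * (2 * s) * (M1 * M1)).
  { replace ((eps * dr * s) * (eps * dr * s)) with ((eps * eps) * (s * s) * (dr * dr)) by ring.
    apply Rmult_le_compat; nra. }
  assert (T2 : (eps * r * (C * df)) * (eps * r * (C * df))
               <= eps * eps * (2 * s) * ((rmax * rmax) * (M2 * M2))).
  { replace ((eps * r * (C * df)) * (eps * r * (C * df)))
      with ((eps * eps) * (C * C) * ((r * r) * (df * df))) by ring.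
    apply Rmult_le_compat; nra. }
  assert (T3 : b * b <= eps * eps * (2 * s) * (rmax * rmax)).
  { unfold b. replace ((eps * r * s) * (eps * r * s)) with ((eps * eps) * (s * s) * (r * r)) by ring.
    apply Rmult_le_compat; nra. }
  nra.
Qed.

Section SubsolutionConstruction.

Variables (H : R -> R -> R -> R) (u0 : R -> R) (x0 : R).
Hypothesis H_smooth : smooth3 H.
Hypothesis H_per : forall x p v, H (x + 1) p v = H x p v.
Hypothesis H_conv : forall x p v, 0 < Hpp H x p v.
Hypothesis H_superlin : superlinear_p H.
Hypothesis u0_visc : viscosity_solution H u0.
Hypothesis u0_nondeg : forall x, ex_derive u0 x -> Hp H x (Derive u0 x) (u0 x) <> 0.
Hypothesis mu_neg : mu H u0 < 0.

Local Notation B := (Bfun H u0).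
Local Notation Hu0' := (Hu0 H u0).
Local Notation mu0 := (mu H u0).
Local Notation rho0 := (rho H u0).
Local Notation f0 := (ffun H u0).
Local Notation w := (wfun H u0 x0).

Let u0_periodic : periodic1 u0 := proj1 u0_visc.
Let u0_continuous : forall x, continuous u0 x := proj1 (proj2 u0_visc).

Lemma u0_is_derive x : is_derive u0 x (Derive u0 x).
Proof. exact (proj2 (u_is_derive H u0 H_smooth H_per H_conv H_superlin u0_visc u0_nondeg x)). Qed.

Lemma u0_classical x : H x (Derive u0 x) (u0 x) = 0.
Proof. exact (u_classical H u0 H_smooth H_per H_conv H_superlin u0_visc u0_nondeg x). Qed.

Lemma Derive_u0_continuous x : continuous (Derive u0) x.
Proof. exact (Derive_u_continuous H u0 H_smooth H_per H_conv H_superlin u0_visc u0_nondeg x). Qed.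

Lemma Derive_u0_periodic : periodic1 (Derive u0).
Proof.
  intros x. symmetry. apply is_derive_unique.
  apply (is_derive_ext (fun y => u0 (y + 1))); [intros; apply u0_periodic|].
  assert (Hc : is_derive (fun y => y + 1) x 1) by (auto_derive; auto; ring).
  pose proof (is_derive_comp u0 (fun y => y + 1) x _ _ (u0_is_derive (x + 1)) Hc) as E.
  unfold scal in E; simpl in E; unfold mult in E; simpl in E. rewrite Rmult_1_l in E. exact E.
Qed.

Lemma B_continuous x : continuous B x.
Proof.
  apply (continuous3_comp (Hp H) (fun y => y) (Derive u0) u0);
    [exact (pderiv_continuous3 H H_smooth (1%nat :: nil))|apply continuous_id
    |apply Derive_u0_continuous|apply u0_continuous].
Qed.

Lemma Hu0_continuous x : continuous Hu0' x.
Proof.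
  apply (continuous3_comp (Hu H) (fun y => y) (Derive u0) u0);
    [exact (pderiv_continuous3 H H_smooth (2%nat :: nil))|apply continuous_id
    |apply Derive_u0_continuous|apply u0_continuous].
Qed.

Lemma B_periodic : periodic1 B.
Proof. intros x. unfold Bfun. rewrite Derive_u0_periodic, u0_periodic. apply Hp_periodic, H_per. Qed.

Lemma Hu0_periodic : periodic1 Hu0'.
Proof. intros x. unfold Hu0. rewrite Derive_u0_periodic, u0_periodic. apply Hu_periodic, H_per. Qed.

Lemma B_neq_0 x : B x <> 0.
Proof. apply u0_nondeg. eexists; apply u0_is_derive. Qed.

Lemma inv_B_continuous x : continuous (fun t => / B t) x.
Proof. apply continuous_Rinv_comp; [apply B_continuous|apply B_neq_0]. Qed.

(* Were this integral 0, [mu] would be 0 (division by zero yields 0 in Rocq),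
   contradicting [mu < 0]. *)
Lemma RInt_inv_B_neq_0 : RInt (fun t => / B t) 0 1 <> 0.
Proof.
  intro E. pose proof mu_neg as M. unfold mu in M. rewrite E in M. unfold Rdiv in M.
  rewrite Rinv_0, Rmult_0_r in M. lra.
Qed.

Lemma Zc_neq_0 : Zc H u0 <> 0.
Proof. unfold Zc. pose proof RInt_inv_B_neq_0. lra. Qed.

Definition rho_rate (t : R) : R := (mu0 - Hu0' t) / B t.

Lemma rho_rate_continuous x : continuous rho_rate x.
Proof.
  apply (continuous_mult (fun t => mu0 - Hu0' t) (fun t => / B t)); [|apply inv_B_continuous].
  apply (continuous_minus (fun _ => mu0) Hu0'); [apply continuous_const|apply Hu0_continuous].
Qed.

Lemma rho_rate_periodic : periodic1 rho_rate.
Proof. intros x. unfold rho_rate. rewrite B_periodic, Hu0_periodic. reflexivity. Qed.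

(* The choice of [mu] is exactly what makes [rho] periodic. *)
Lemma RInt_rho_rate : RInt rho_rate 0 1 = 0.
Proof.
  transitivity (RInt (fun t => mu0 * (/ B t) - Hu0' t / B t) 0 1).
  { apply (RInt_ext (V := R_CompleteNormedModule)). intros. unfold rho_rate. simpl. field.
    apply B_neq_0. }
  rewrite RInt_scal_minus.
  - pose proof RInt_inv_B_neq_0. unfold mu. simpl. field. auto.
  - apply ex_RInt_continuous_R, inv_B_continuous.
  - apply ex_RInt_continuous_R. intros x.
    apply (continuous_mult Hu0' (fun t => / B t)); [apply Hu0_continuous|apply inv_B_continuous].
Qed.

Lemma log_rho_periodic : periodic1 (fun x => RInt rho_rate 0 x).
Proof.
  apply RInt_0_periodic1; [apply rho_rate_continuous|apply rho_rate_periodic|apply RInt_rho_rate].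
Qed.

Lemma rho_is_derive x : is_derive rho0 x (rho_rate x * rho0 x).
Proof.
  pose proof (is_derive_comp exp (fun y => RInt rho_rate 0 y) x (exp (RInt rho_rate 0 x))
                (rho_rate x)) as E.
  apply (is_derive_ext (fun y => exp (RInt rho_rate 0 y))); [reflexivity|]. apply E.
  - apply is_derive_Reals, derivable_pt_lim_exp.
  - apply is_derive_RInt_0, rho_rate_continuous.
Qed.

Lemma rho_bounds : exists rmin rmax, 0 < rmin /\ forall x, rmin <= rho0 x <= rmax.
Proof.
  destruct (periodic1_bounded _ log_rho_periodic) as [M HM].
  { intros x _. apply ex_derive_continuous_R. eexists.
    apply is_derive_RInt_0, rho_rate_continuous. }
  exists (exp (- M)), (exp M). split; [apply exp_pos|]. intros x. unfold rho.
  specialize (HM x). apply Rabs_le_between in HM.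
  assert (Hexp : forall a b, a <= b -> exp a <= exp b)
    by (intros a b [Hlt| ->]; [left; apply exp_increasing, Hlt|right; reflexivity]).
  split; apply Hexp; unfold rho_rate in HM; lra.
Qed.

Definition freq : R := 2 * PI / Zc H u0.

Lemma ffun_is_derive x : is_derive f0 x (freq * - / B x).
Proof.
  apply is_derive_scal.
  apply (is_derive_RInt_0 (fun t => - / B t)). intros y.
  apply (continuous_opp (fun t => / B t)), inv_B_continuous.
Qed.

Definition phase (x t : R) : R := - (PI / 2) + f0 x - f0 x0 + freq * t.

Lemma wfun_phase eps x t : w eps x t = u0 x + eps * rho0 x * (1 + sin (phase x t)).
Proof. unfold wfun, phase, freq. ring. Qed.

Lemma wfun_time_periodic eps x t : w eps x (t + Tper H u0) = w eps x t.
Proof.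
  rewrite !wfun_phase.
  replace (phase x (t + Tper H u0)) with (phase x t + freq * Tper H u0)
    by (unfold phase; ring).
  unfold freq, Tper. pose proof Zc_neq_0 as Hz. f_equal. f_equal. f_equal.
  destruct (Rle_or_lt 0 (Zc H u0)) as [Hp|Hn].
  - rewrite Rabs_pos_eq by lra.
    replace (2 * PI / Zc H u0 * Zc H u0) with (2 * PI) by (field; auto).
    rewrite sin_plus, cos_2PI, sin_2PI. ring.
  - rewrite Rabs_left by lra.
    replace (2 * PI / Zc H u0 * - Zc H u0) with (- (2 * PI)) by (field; auto).
    rewrite sin_plus, cos_neg, sin_neg, cos_2PI, sin_2PI. ring.
Qed.

Lemma Derive_wfun_t eps x t :
  Derive (fun s => w eps x s) t = eps * rho0 x * cos (phase x t) * freq.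
Proof.
  apply is_derive_unique. unfold wfun, phase, freq. auto_derive; auto. ring.
Qed.

Lemma Derive_wfun_x eps x t :
  Derive (fun y => w eps y t) x = Derive u0 x
    + (eps * (rho_rate x * rho0 x) * (1 + sin (phase x t))
       + eps * rho0 x * (cos (phase x t) * (freq * - / B x))).
Proof.
  apply is_derive_unique. unfold wfun, phase. fold freq. auto_derive.
  - split; [eexists; apply u0_is_derive|]. split; [eexists; apply rho_is_derive|].
    split; [eexists; apply rho_is_derive|]. split; [eexists; apply ffun_is_derive|]. auto.
  - replace (Derive (fun y => rho0 y) x) with (rho_rate x * rho0 x)
      by (symmetry; apply is_derive_unique, rho_is_derive).
    replace (Derive (fun y => f0 y) x) with (freq * - / B x)
      by (symmetry; apply is_derive_unique, ffun_is_derive).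
    change (Derive (fun y => u0 y) x) with (Derive u0 x).
    replace (- (PI / 2) + f0 x + - f0 x0 + freq * t) with (- (PI / 2) + f0 x - f0 x0 + freq * t)
      by ring.
    ring.
Qed.

Lemma rho_derivative_bounded : exists M, 0 <= M /\ forall x, Rabs (rho_rate x * rho0 x) <= M.
Proof.
  destruct rho_bounds as [rmin [rmax [Hrmin Hr]]].
  destruct (periodic1_bounded rho_rate rho_rate_periodic) as [MG HMG];
    [intros; apply rho_rate_continuous|].
  exists (MG * rmax). split.
  - pose proof (HMG 0). pose proof (Rabs_pos (rho_rate 0)). pose proof (Hr 0).
    apply Rmult_le_pos; lra.
  - intros x. rewrite Rabs_mult, (Rabs_pos_eq (rho0 x)) by (pose proof (Hr x); lra).
    apply Rmult_le_compat; [apply Rabs_pos|pose proof (Hr x); lra|apply HMG|apply Hr].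
Qed.

Lemma ffun_derivative_bounded : exists M, 0 <= M /\ forall x, Rabs (freq * - / B x) <= M.
Proof.
  destruct (periodic1_bounded (fun x => freq * - / B x)) as [MF HMF].
  - intros x. simpl. rewrite B_periodic. reflexivity.
  - intros x _. apply (continuous_scal_r freq (fun x => - / B x)).
    apply (continuous_opp (fun t => / B t)), inv_B_continuous.
  - exists MF. split; [pose proof (HMF 0); pose proof (Rabs_pos (freq * - / B 0)); lra|exact HMF].
Qed.

(* [rho' = (mu - H_u) rho / B] and [f' = - freq / B] are chosen so that the first-order
   terms of the expansion collapse to [eps mu rho (1 + sin)]. *)
Lemma first_order_terms eps x t :
  let S := sin (phase x t) in let C := cos (phase x t) in
  eps * rho0 x * C * freq
  + Hp H x (Derive u0 x) (u0 x)
      * (eps * (rho_rate x * rho0 x) * (1 + S) + eps * rho0 x * (C * (freq * - / B x)))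
  + Hu H x (Derive u0 x) (u0 x) * (eps * rho0 x * (1 + S))
  = eps * mu0 * rho0 x * (1 + S).
Proof.
  intros S C. pose proof (B_neq_0 x) as Bn. unfold rho_rate, Bfun, Hu0 in *. field. exact Bn.
Qed.

Lemma wfun_expansion_bound : exists A Q, 0 <= A /\ 0 <= Q /\
  forall eps x t, 0 < eps -> eps * (A + 1) <= 1 ->
    Derive (fun s => w eps x s) t + H x (Derive (fun y => w eps y t) x) (w eps x t)
    <= eps * (1 + sin (phase x t)) * (mu0 * rho0 x + eps * Q).
Proof.
  destruct rho_bounds as [rmin [rmax [Hrmin Hr]]].
  destruct rho_derivative_bounded as [M1 [HM1 Hdr]].
  destruct ffun_derivative_bounded as [MF [HMF0 HMF]].
  destruct (periodic1_bounded (Derive u0) Derive_u0_periodic) as [MD HMD];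
    [intros; apply Derive_u0_continuous|].
  destruct (periodic1_bounded u0 u0_periodic) as [M0 HM0]; [intros; apply u0_continuous|].
  destruct (H_second_order_upper_bound H H_smooth H_per MD M0) as [K [HK HT]].
  assert (0 <= rmax) by (pose proof (Hr 0); lra).
  set (Cst := 4 * (M1 * M1) + 4 * (rmax * rmax) * (MF * MF) + 2 * (rmax * rmax)).
  assert (0 <= rmax * MF) by (apply Rmult_le_pos; lra).
  assert (0 <= Cst).
  { unfold Cst. pose proof (Rmult_le_pos _ _ (Rle_0_sqr rmax) (Rle_0_sqr MF)).
    pose proof (Rle_0_sqr M1). pose proof (Rle_0_sqr rmax). unfold Rsqr in *. lra. }
  exists (2 * M1 + rmax * MF + 2 * rmax), (K * Cst).
  split; [lra|]. split; [apply Rmult_le_pos; lra|]. intros eps x t Heps HeA.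
  rewrite Derive_wfun_t, Derive_wfun_x, wfun_phase.
  pose proof (first_order_terms eps x t) as First. cbv zeta in First.
  pose proof (SIN_bound (phase x t)) as HS.
  pose proof (sin2_cos2 (phase x t)) as HSC. unfold Rsqr in HSC.
  set (S := sin (phase x t)) in *. set (C := cos (phase x t)) in *.
  assert (Hrx : 0 <= rho0 x <= rmax) by (pose proof (Hr x); lra).
  destruct (trig_perturbation_abs_bounds eps (rho0 x) (rho_rate x * rho0 x) (freq * - / B x)
              S C rmax M1 MF ltac:(lra) Hrx (Hdr x) (HMF x) HSC) as [Ha Hb].
  pose proof (trig_perturbation_square_bound eps (rho0 x) (rho_rate x * rho0 x)
                (freq * - / B x) S C rmax M1 MF Hrx (Hdr x) (HMF x) HSC) as Hq. cbv zeta in Hq.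
  set (a := eps * (rho_rate x * rho0 x) * (1 + S) + eps * rho0 x * (C * (freq * - / B x))) in *.
  set (b := eps * rho0 x * (1 + S)) in *.
  pose proof (HT x (Derive u0 x) (u0 x) a b (HMD x) (HM0 x) ltac:(nra) ltac:(nra)) as Taylor.
  rewrite u0_classical in Taylor. fold Cst in Hq.
  assert (K * (a * a + b * b) <= K * (eps * eps * (1 + S) * Cst)) by (apply Rmult_le_compat_l; lra).
  nra.
Qed.

Lemma wfun_subsolution : exists eps1, 0 < eps1 /\
  forall eps, 0 < eps -> eps <= eps1 -> forall x t,
    Derive (fun s => w eps x s) t + H x (Derive (fun y => w eps y t) x) (w eps x t) <= 0.
Proof.
  destruct rho_bounds as [rmin [rmax [Hrmin Hr]]].
  destruct wfun_expansion_bound as [A [Q [HA [HQ Hexp]]]].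
  set (e1 := 1 / (A + 1)). set (e2 := - mu0 * rmin / (Q + 1)).
  assert (0 < e1) by (unfold e1; apply Rdiv_lt_0_compat; lra).
  assert (0 < e2) by (unfold e2; apply Rdiv_lt_0_compat; nra).
  exists (Rmin e1 e2). split; [apply Rmin_pos; auto|].
  intros eps Heps Hle x t.
  pose proof (Rmin_l e1 e2). pose proof (Rmin_r e1 e2).
  assert (HeA : eps * (A + 1) <= 1).
  { apply Rle_trans with (e1 * (A + 1)); [apply Rmult_le_compat_r; lra|].
    unfold e1. right. field. lra. }
  assert (HeQ : eps * (Q + 1) <= - mu0 * rmin).
  { apply Rle_trans with (e2 * (Q + 1)); [apply Rmult_le_compat_r; lra|].
    unfold e2. right. field. lra. }
  eapply Rle_trans; [apply Hexp; auto|].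
  pose proof (SIN_bound (phase x t)). pose proof (Hr x).
  assert (0 <= eps * (1 + sin (phase x t))) by nra.
  assert (mu0 * rho0 x + eps * Q <= 0) by nra.
  nra.
Qed.

End SubsolutionConstruction.

Theorem lemma4p1
  (H : R -> R -> R -> R) (kappa : R) (u0 : R -> R) (x0 : R)
  (H_smooth : smooth3 H)
  (H_per : forall x p u, H (x + 1) p u = H x p u)
  (H_conv : forall x p u, 0 < Hpp H x p u)
  (H_superlin : superlinear_p H)
  (kappa_pos : 0 < kappa)
  (H_lip : forall x p u, Rabs (Hu H x p u) <= kappa)
  (u0_visc : viscosity_solution H u0)
  (u0_nondeg : forall x, ex_derive u0 x -> Hp H x (Derive u0 x) (u0 x) <> 0)
  (mu_neg : mu H u0 < 0)
  (x0_S : 0 <= x0 <= 1) :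
  exists eps1 : R, 0 < eps1 /\
    forall eps : R, 0 < eps -> eps <= eps1 ->
      forall x t : R, 0 <= t ->
        wfun H u0 x0 eps x (t + Tper H u0) = wfun H u0 x0 eps x t /\
        Derive (fun s => wfun H u0 x0 eps x s) t
          + H x (Derive (fun y => wfun H u0 x0 eps y t) x) (wfun H u0 x0 eps x t)
          <= 0.
Proof.
  destruct (wfun_subsolution H u0 x0 H_smooth H_per H_conv H_superlin u0_visc u0_nondeg mu_neg)
    as [eps1 [Heps1 Hsub]].
  exists eps1. split; [exact Heps1|]. intros eps Heps Hle x t _. split.
  - exact (wfun_time_periodic H u0 x0 mu_neg eps x t).
  - exact (Hsub eps Heps Hle x t).
Qed.
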